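(* Let $R>0$, $m\in\mathbb Z$, $\lambda>0$, and fix a smooth $f:[0,R]\to[0,1]$ with $f(0)=1$, $f(R)=0$ and $0\ge f'(r)\ge-C_fr^2$ for all $r$. There is a constant $C=C(\lambda,m,R,f)$ such that for every $\epsilon>0$, $T>0$ and every smooth configuration $U=(\phi,A)$, $A=A_0dy^0+A_1dy^1+A_2dy^2$, on $[0,T]\times\overline{B_\nu(R)}$ and every $t\in(0,T)$, $$|\mathcal D^\nu_m(U(t);R)-\mathcal D^\nu_m(U(0);R)|\le C\int_{(0,t)\times B_\nu(R)}\Big(|D_0\phi|^2+\epsilon^2(F_{01}^2+F_{02}^2)+|y^\nu|^2e^\nu_{\epsilon,\lambda}(U)\Big)\,dy^\nu\,dy^0.$$
   Context: Points are $(y^0,y^\nu)$, $y^\nu=(y^1,y^2)\in\mathbb R^2$, $B_\nu(R)=\{|y^\nu|<R\}$. $D_a\phi=\partial_a\phi-iA_a\phi$, $F_{ab}=\partial_aA_b-\partial_bA_a$, $\langle f,g\rangle=\mathrm{Re}(f\bar g)$. $U(s)$ denotes the 2d configuration $(\phi(s,\cdot),A_1(s,\cdot)dy^1+A_2(s,\cdot)dy^2)$. For a 2d configuration $V=(\phi,A_1dy^1+A_2dy^2)$: $e^\nu_{\epsilon,\lambda}(V)=\frac12(|D_1\phi|^2+|D_2\phi|^2)+\frac{\epsilon^2}4F_{12}^2+\frac{\lambda}{8\epsilon^2}(|\phi|^2-1)^2$, $j(V)=(\langle i\phi,D_1\phi\rangle,\langle i\phi,D_2\phi\rangle)$, $\omega(V)=\frac12(\partial_1j_2-\partial_2j_1+F_{12})$,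 and the vorticity confinement functional is $\mathcal D^\nu_m(V;R)=\pi m-\int_{B_\nu(R)}f(|y^\nu|)\,\omega(V)(y^\nu)\,dy^\nu$. In the integrand, $e^\nu_{\epsilon,\lambda}(U)$ at $(y^0,y^\nu)$ means $e^\nu_{\epsilon,\lambda}(U(y^0))(y^\nu)$. *)

From Stdlib Require Import Reals Lra ZArith List ClassicalEpsilon.
Open Scope R_scope.

(** Total derivative operator on R -> R (0 where not differentiable). *)
Definition deriv1 (g : R -> R) (x : R) : R :=
  match excluded_middle_informative (exists l, derivable_pt_lim g x l) with
  | left H => proj1_sig (constructive_indefinite_description _ H)
  | right _ => 0
  end.

Definition smooth1 (g : R -> R) : Prop :=
  forall (n : nat) (x : R), exists l, derivable_pt_lim (Nat.iter n deriv1 g) x l.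

(** Functions of space-time points (y0,y1,y2). *)
Definition F3 := R -> R -> R -> R.

Inductive dir := d0 | d1 | d2.

Definition pd (d : dir) (g : F3) : F3 :=
  fun y0 y1 y2 =>
    match d with
    | d0 => deriv1 (fun s => g s y1 y2) y0
    | d1 => deriv1 (fun s => g y0 s y2) y1
    | d2 => deriv1 (fun s => g y0 y1 s) y2
    end.

Definition has_pd (d : dir) (g : F3) : Prop :=
  forall y0 y1 y2,
    match d with
    | d0 => exists l, derivable_pt_lim (fun s => g s y1 y2) y0 l
    | d1 => exists l, derivable_pt_lim (fun s => g y0 s y2) y1 l
    | d2 => exists l, derivable_pt_lim (fun s => g y0 y1 s) y2 l
    end.

Definition continuous3 (g : F3) : Prop :=
  forall x0 x1 x2 eps, 0 < eps -> exists del, 0 < del /\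
    forall y0 y1 y2, Rabs (y0 - x0) < del -> Rabs (y1 - x1) < del ->
      Rabs (y2 - x2) < del -> Rabs (g y0 y1 y2 - g x0 x1 x2) < eps.

Fixpoint iter_pd (ds : list dir) (g : F3) : F3 :=
  match ds with
  | nil => g
  | d :: ds' => pd d (iter_pd ds' g)
  end.

Definition smooth3 (g : F3) : Prop :=
  forall ds : list dir, continuous3 (iter_pd ds g) /\ forall d, has_pd d (iter_pd ds g).

(** Total Riemann integral on [a,b] (0 if not Riemann integrable). *)
Definition RI (g : R -> R) (a b : R) : R :=
  match excluded_middle_informative (exists pr : Riemann_integrable g a b, True) with
  | left H => RiemannInt (proj1_sig (constructive_indefinite_description _ H))
  | right _ => 0
  end.

(** Integral over the disc B_nu(R) (iterated, Cartesian coordinates). *)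
Definition disc_int (Rad : R) (h : R -> R -> R) : R :=
  RI (fun y1 => RI (fun y2 => h y1 y2) (- sqrt (Rad ^ 2 - y1 ^ 2)) (sqrt (Rad ^ 2 - y1 ^ 2)))
     (- Rad) Rad.

(** Configuration U = (phi, A0 dy0 + A1 dy1 + A2 dy2), phi = u + i v. *)
Record config := mkConfig { cu : F3; cv : F3; cA0 : F3; cA1 : F3; cA2 : F3 }.

Definition smooth_config (U : config) : Prop :=
  smooth3 (cu U) /\ smooth3 (cv U) /\ smooth3 (cA0 U) /\ smooth3 (cA1 U) /\ smooth3 (cA2 U).

Definition cA (U : config) (d : dir) : F3 :=
  match d with d0 => cA0 U | d1 => cA1 U | d2 => cA2 U end.

(** D_a phi = d_a phi - i A_a phi, real and imaginary parts. *)
Definition Dre (U : config) (d : dir) : F3 :=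
  fun y0 y1 y2 => pd d (cu U) y0 y1 y2 + cA U d y0 y1 y2 * cv U y0 y1 y2.
Definition Dim (U : config) (d : dir) : F3 :=
  fun y0 y1 y2 => pd d (cv U) y0 y1 y2 - cA U d y0 y1 y2 * cu U y0 y1 y2.

Definition Dsq (U : config) (d : dir) : F3 :=
  fun y0 y1 y2 => Dre U d y0 y1 y2 ^ 2 + Dim U d y0 y1 y2 ^ 2.

Definition Fc (U : config) (a b : dir) : F3 :=
  fun y0 y1 y2 => pd a (cA U b) y0 y1 y2 - pd b (cA U a) y0 y1 y2.

Definition phisq (U : config) : F3 :=
  fun y0 y1 y2 => cu U y0 y1 y2 ^ 2 + cv U y0 y1 y2 ^ 2.

Definition e_nu (eps lam : R) (U : config) : F3 :=
  fun y0 y1 y2 =>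
    / 2 * (Dsq U d1 y0 y1 y2 + Dsq U d2 y0 y1 y2)
    + eps ^ 2 / 4 * Fc U d1 d2 y0 y1 y2 ^ 2
    + lam / (8 * eps ^ 2) * (phisq U y0 y1 y2 - 1) ^ 2.

(** j_a = <i phi, D_a phi> = Re(i phi * conj(D_a phi)), a = 1,2. *)
Definition jc (U : config) (d : dir) : F3 :=
  fun y0 y1 y2 => - cv U y0 y1 y2 * Dre U d y0 y1 y2 + cu U y0 y1 y2 * Dim U d y0 y1 y2.

Definition omega (U : config) : F3 :=
  fun y0 y1 y2 =>
    / 2 * (pd d1 (jc U d2) y0 y1 y2 - pd d2 (jc U d1) y0 y1 y2 + Fc U d1 d2 y0 y1 y2).

Definition Dconf (m : Z) (Rad : R) (f : R -> R) (U : config) (s : R) : R :=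
  PI * IZR m - disc_int Rad (fun y1 y2 => f (sqrt (y1 ^ 2 + y2 ^ 2)) * omega U s y1 y2).

Definition rhs_density (eps lam : R) (U : config) : F3 :=
  fun y0 y1 y2 =>
    Dsq U d0 y0 y1 y2
    + eps ^ 2 * (Fc U d0 d1 y0 y1 y2 ^ 2 + Fc U d0 d2 y0 y1 y2 ^ 2)
    + (y1 ^ 2 + y2 ^ 2) * e_nu eps lam U y0 y1 y2.

Definition spacetime_int (t Rad : R) (h : F3) : R :=
  RI (fun y0 => disc_int Rad (h y0)) 0 t.

(* Write
     D(s) = pi m - \int_{B(R)} f(|y|) omega(U(s)) dy,
     rho  = |D_0 phi|^2 + eps^2 (F_01^2 + F_02^2) + |y|^2 e_{eps,lambda}(U).
   The proof has four steps.
   1. Differentiating under the integral sign and the fundamental theorem of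
      calculus: D(t) - D(0) = - \int_0^t \int_B f(|y|) d_0 omega.
   2. Since partial derivatives commute, 2 d_0 omega = d_1 X_2 - d_2 X_1 with
      X_k = d_0 j_k - d_k j_0 + F_0k, and X_k has the gauge invariant form
      X_k = 2 <i D_0 phi, D_k phi> + (1 - |phi|^2) F_0k.
   3. As f(R) = 0, integration by parts on the disc moves d_1, d_2 onto
      f(|y|), whose gradient is bounded by C_f |y|^2 because |f'(r)| <= C_f r^2.
   4. Young's inequality bounds |y|^2 |X_k| pointwise by a multiple of rho. *)

From Stdlib Require Import Reals Lra ZArith Classical ClassicalEpsilon FunctionalExtensionality.
From Coquelicot Require Import Coquelicot.
Open Scope R_scope.

(** * Continuity in three variables *)

Definition uncurry3 (g : F3) : R * (R * R) -> R :=
  fun q => g (fst q) (fst (snd q)) (snd (snd q)).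

(** [continuous3] is Coquelicot continuity on [R * (R * R)]; this gives access
    to the library's closure lemmas. *)
Lemma continuous3_iff (g : F3) :
  continuous3 g <-> forall x0 x1 x2, continuous (uncurry3 g) (x0, (x1, x2)).
Proof.
  split.
  - intros H x0 x1 x2. apply filterlim_locally. intro eps.
    destruct (H x0 x1 x2 eps (cond_pos eps)) as [del [Hdel Hg]].
    exists (mkposreal del Hdel). intros [y0 [y1 y2]] [B0 [B1 B2]].
    apply Hg; assumption.
  - intros H x0 x1 x2 eps Heps.
    destruct (proj1 (filterlim_locally (uncurry3 g) _) (H x0 x1 x2)
                (mkposreal eps Heps)) as [del Hdel].
    exists del. split; [apply cond_pos|].
    intros y0 y1 y2 h0 h1 h2. apply (Hdel (y0, (y1, y2))). repeat split; assumption.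
Qed.

Lemma continuous3_plus (g h : F3) : continuous3 g -> continuous3 h ->
  continuous3 (fun a b c => g a b c + h a b c).
Proof.
  rewrite !continuous3_iff. intros Hg Hh x0 x1 x2.
  apply (continuous_plus (V := R_NormedModule) (uncurry3 g) (uncurry3 h)); auto.
Qed.

Lemma continuous3_opp (g : F3) : continuous3 g -> continuous3 (fun a b c => - g a b c).
Proof.
  rewrite !continuous3_iff. intros Hg x0 x1 x2.
  apply (continuous_opp (V := R_NormedModule) (uncurry3 g)); auto.
Qed.

Lemma continuous3_minus (g h : F3) : continuous3 g -> continuous3 h ->
  continuous3 (fun a b c => g a b c - h a b c).
Proof. intros. apply continuous3_plus; [|apply continuous3_opp]; assumption. Qed.

Lemma continuous3_mult (g h : F3) : continuous3 g -> continuous3 h ->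
  continuous3 (fun a b c => g a b c * h a b c).
Proof.
  rewrite !continuous3_iff. intros Hg Hh x0 x1 x2.
  apply (continuous_mult (K := R_AbsRing) (uncurry3 g) (uncurry3 h)); auto.
Qed.

Lemma continuous3_const (c : R) : continuous3 (fun _ _ _ => c).
Proof. rewrite continuous3_iff. intros. apply continuous_const. Qed.

Lemma continuous3_pow (g : F3) (n : nat) : continuous3 g ->
  continuous3 (fun a b c => g a b c ^ n).
Proof.
  intro H; induction n; simpl.
  - apply continuous3_const.
  - apply continuous3_mult; assumption.
Qed.

Lemma continuous3_proj1 : continuous3 (fun _ b _ => b).
Proof. intros x0 x1 x2 e He. exists e; auto. Qed.

Lemma continuous3_proj2 : continuous3 (fun _ _ c => c).
Proof. intros x0 x1 x2 e He. exists e; auto. Qed.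

Lemma continuous3_line2 (k : F3) s y1 z : continuous3 k -> continuous (k s y1) z.
Proof.
  intro H. apply continuity_pt_filterlim. intros e He.
  destruct (H s y1 z e He) as [d [Hd Hk]]. exists d; split; auto.
  intros x [_ Hx]. apply Hk; auto; rewrite Rminus_diag, Rabs_R0; exact Hd.
Qed.

Lemma continuous3_plane12 (k : F3) s y1 y2 : continuous3 k ->
  continuity_2d_pt (k s) y1 y2.
Proof.
  intros H e. destruct (H s y1 y2 e (cond_pos e)) as [d [Hd Hk]].
  exists (mkposreal d Hd). intros u v Hu Hv. apply Hk; auto.
  rewrite Rminus_diag, Rabs_R0; exact Hd.
Qed.

Lemma continuous3_plane02 (k : F3) s y1 y2 : continuous3 k ->
  continuity_2d_pt (fun a c => k a y1 c) s y2.
Proof.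
  intros H e. destruct (H s y1 y2 e (cond_pos e)) as [d [Hd Hk]].
  exists (mkposreal d Hd). intros u v Hu Hv. apply Hk; auto.
  rewrite Rminus_diag, Rabs_R0; exact Hd.
Qed.

Lemma continuous3_plane01 (k : F3) s y1 y2 : continuous3 k ->
  continuity_2d_pt (fun a b => k a b y2) s y1.
Proof.
  intros H e. destruct (H s y1 y2 e (cond_pos e)) as [d [Hd Hk]].
  exists (mkposreal d Hd). intros u v Hu Hv. apply Hk; auto.
  rewrite Rminus_diag, Rabs_R0; exact Hd.
Qed.

Lemma continuous3_static (h : R -> R -> R) :
  (forall x y, continuity_2d_pt h x y) -> continuous3 (fun _ y1 y2 => h y1 y2).
Proof.
  intros H x0 x1 x2 e He. destruct (H x1 x2 (mkposreal e He)) as [d Hd].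
  exists d; split; [apply cond_pos|]. intros. apply Hd; auto.
Qed.

Lemma continuous3_uniform2 (k : F3) s0 y0 a b eps : continuous3 k -> 0 < eps ->
  exists d, 0 < d /\ forall s y1 y2, Rabs (s - s0) < d -> Rabs (y1 - y0) < d ->
    a <= y2 <= b -> Rabs (k s y1 y2 - k s0 y0 y2) < eps.
Proof.
  intros Hk He.
  assert (Hloc : forall t, {del : posreal | forall s y1 y2, Rabs (s - s0) < del ->
     Rabs (y1 - y0) < del -> Rabs (y2 - t) < del ->
     Rabs (k s y1 y2 - k s0 y0 t) < eps / 2}).
  { intro t. apply constructive_indefinite_description.
    destruct (Hk s0 y0 t (eps / 2)) as [del [Hd H]]; [lra|].
    exists (mkposreal del Hd). exact H. }
  destruct (compactness_value_1d a b (fun t => proj1_sig (Hloc t))) as [d Hd].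
  exists d. split; [apply cond_pos|]. intros s y1 y2 Hs Hy Hy2.
  apply NNPP. intro Hn. apply (Hd y2 Hy2). intros [t [_ [Hxt Hdt]]].
  apply Hn. destruct (Hloc t) as [del Hdel]. simpl in *.
  assert (A := Hdel s y1 y2 ltac:(lra) ltac:(lra) Hxt).
  assert (B := Hdel s0 y0 y2 ltac:(rewrite Rminus_diag, Rabs_R0; apply cond_pos)
                 ltac:(rewrite Rminus_diag, Rabs_R0; apply cond_pos) Hxt).
  apply Rabs_def2 in A; apply Rabs_def2 in B. apply Rabs_def1; lra.
Qed.

Lemma continuity_2d_line2 (h : R -> R -> R) x y :
  continuity_2d_pt h x y -> continuous (h x) y.
Proof.
  intro H. apply continuity_pt_filterlim. intros e He.
  destruct (H (mkposreal e He)) as [d Hd]. exists d; split; [apply cond_pos|].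
  intros z [_ Hz]. apply Hd; [rewrite Rminus_diag, Rabs_R0; apply cond_pos | exact Hz].
Qed.

Lemma continuity_2d_swap (h : R -> R -> R) x y :
  continuity_2d_pt h x y -> continuity_2d_pt (fun a b => h b a) y x.
Proof. intros H e. destruct (H e) as [d Hd]. exists d. intros. apply Hd; auto. Qed.

Definition C2 (h : R -> R -> R) := forall x y, continuity_2d_pt h x y.

Lemma C2_line (h : R -> R -> R) a : C2 h -> forall z, continuous (h a) z.
Proof. intros H z. apply continuity_2d_line2, H. Qed.

Lemma C2_plus (g h : R -> R -> R) : C2 g -> C2 h -> C2 (fun a b => g a b + h a b).
Proof. intros G H x y. apply continuity_2d_pt_plus; auto. Qed.

Lemma C2_minus (g h : R -> R -> R) : C2 g -> C2 h -> C2 (fun a b => g a b - h a b).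
Proof. intros G H x y. apply continuity_2d_pt_minus; auto. Qed.

Lemma C2_mult (g h : R -> R -> R) : C2 g -> C2 h -> C2 (fun a b => g a b * h a b).
Proof. intros G H x y. apply continuity_2d_pt_mult; auto. Qed.

Lemma C2_swap (h : R -> R -> R) : C2 h -> C2 (fun a b => h b a).
Proof. intros H x y. apply continuity_2d_swap, H. Qed.

Lemma C2_time_slice (k : F3) s : continuous3 k -> C2 (k s).
Proof. intros H x y. apply continuous3_plane12, H. Qed.

(** * Partial derivatives *)

Lemma deriv1_spec (h : R -> R) x l : derivable_pt_lim h x l -> deriv1 h x = l.
Proof.
  intro H. unfold deriv1.
  destruct (excluded_middle_informative _) as [E|E].
  - destruct (constructive_indefinite_description _ E) as [l' H']; simpl.
    eapply uniqueness_limite; eauto.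
  - exfalso; apply E; eauto.
Qed.

Definition line (d : dir) (g : F3) y0 y1 y2 : R -> R :=
  match d with
  | d0 => fun s => g s y1 y2
  | d1 => fun s => g y0 s y2
  | d2 => fun s => g y0 y1 s
  end.

Definition coord (d : dir) (y0 y1 y2 : R) : R :=
  match d with d0 => y0 | d1 => y1 | d2 => y2 end.

Lemma line_at d g y0 y1 y2 : line d g y0 y1 y2 (coord d y0 y1 y2) = g y0 y1 y2.
Proof. destruct d; reflexivity. Qed.

Lemma has_pd_line d g : has_pd d g <-> forall y0 y1 y2, exists l,
  derivable_pt_lim (line d g y0 y1 y2) (coord d y0 y1 y2) l.
Proof. destruct d; reflexivity. Qed.

Lemma pd_spec d g y0 y1 y2 : has_pd d g ->
  derivable_pt_lim (line d g y0 y1 y2) (coord d y0 y1 y2) (pd d g y0 y1 y2).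
Proof.
  intro H. destruct (proj1 (has_pd_line d g) H y0 y1 y2) as [l Hl].
  replace (pd d g y0 y1 y2) with l; [exact Hl|].
  symmetry. destruct d; apply deriv1_spec; exact Hl.
Qed.

Lemma pd_unique d g y0 y1 y2 l :
  derivable_pt_lim (line d g y0 y1 y2) (coord d y0 y1 y2) l -> pd d g y0 y1 y2 = l.
Proof. destruct d; apply deriv1_spec. Qed.

Lemma is_derive_pd d g y0 y1 y2 : has_pd d g ->
  is_derive (line d g y0 y1 y2) (coord d y0 y1 y2) (pd d g y0 y1 y2).
Proof. intro. apply is_derive_Reals, pd_spec; assumption. Qed.

Lemma pd_plus_lim d g h y0 y1 y2 : has_pd d g -> has_pd d h ->
  derivable_pt_lim (line d (fun a b c => g a b c + h a b c) y0 y1 y2)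
    (coord d y0 y1 y2) (pd d g y0 y1 y2 + pd d h y0 y1 y2).
Proof.
  intros Hg Hh. replace (line d _ y0 y1 y2)
    with (fun s => line d g y0 y1 y2 s + line d h y0 y1 y2 s) by (destruct d; reflexivity).
  exact (derivable_pt_lim_plus _ _ _ _ _ (pd_spec d g y0 y1 y2 Hg) (pd_spec d h y0 y1 y2 Hh)).
Qed.

Lemma pd_mult_lim d g h y0 y1 y2 : has_pd d g -> has_pd d h ->
  derivable_pt_lim (line d (fun a b c => g a b c * h a b c) y0 y1 y2) (coord d y0 y1 y2)
    (pd d g y0 y1 y2 * h y0 y1 y2 + g y0 y1 y2 * pd d h y0 y1 y2).
Proof.
  intros Hg Hh. replace (line d _ y0 y1 y2)
    with (fun s => line d g y0 y1 y2 s * line d h y0 y1 y2 s) by (destruct d; reflexivity).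
  rewrite <- (line_at d g), <- (line_at d h).
  exact (derivable_pt_lim_mult _ _ _ _ _ (pd_spec d g y0 y1 y2 Hg) (pd_spec d h y0 y1 y2 Hh)).
Qed.

Lemma pd_const_lim d (c : R) y0 y1 y2 :
  derivable_pt_lim (line d (fun _ _ _ => c) y0 y1 y2) (coord d y0 y1 y2) 0.
Proof. destruct d; apply derivable_pt_lim_const. Qed.

Lemma has_pd_plus d g h : has_pd d g -> has_pd d h -> has_pd d (fun a b c => g a b c + h a b c).
Proof. intros. apply has_pd_line. intros. eexists. apply pd_plus_lim; assumption. Qed.

Lemma has_pd_mult d g h : has_pd d g -> has_pd d h -> has_pd d (fun a b c => g a b c * h a b c).
Proof. intros. apply has_pd_line. intros. eexists. apply pd_mult_lim; assumption. Qed.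

Lemma has_pd_const d (c : R) : has_pd d (fun _ _ _ => c).
Proof. apply has_pd_line. intros. eexists. apply pd_const_lim. Qed.

Lemma pd_plus d g h y0 y1 y2 : has_pd d g -> has_pd d h ->
  pd d (fun a b c => g a b c + h a b c) y0 y1 y2 = pd d g y0 y1 y2 + pd d h y0 y1 y2.
Proof. intros. apply pd_unique, pd_plus_lim; assumption. Qed.

Lemma pd_mult d g h y0 y1 y2 : has_pd d g -> has_pd d h ->
  pd d (fun a b c => g a b c * h a b c) y0 y1 y2 =
  pd d g y0 y1 y2 * h y0 y1 y2 + g y0 y1 y2 * pd d h y0 y1 y2.
Proof. intros. apply pd_unique, pd_mult_lim; assumption. Qed.

Lemma pd_const d (c : R) y0 y1 y2 : pd d (fun _ _ _ => c) y0 y1 y2 = 0.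
Proof. apply pd_unique, pd_const_lim. Qed.

Lemma fun3_ext (g h : F3) : (forall a b c, g a b c = h a b c) -> g = h.
Proof. intro E. extensionality a; extensionality b; extensionality c; apply E. Qed.

Lemma neg_as_mult (g : F3) : (fun a b c => - g a b c) = (fun a b c => -1 * g a b c).
Proof. apply fun3_ext. intros; ring. Qed.

Lemma has_pd_opp d g : has_pd d g -> has_pd d (fun a b c => - g a b c).
Proof. intro. rewrite neg_as_mult. apply has_pd_mult; [apply has_pd_const|assumption]. Qed.

Lemma pd_opp d g y0 y1 y2 : has_pd d g ->
  pd d (fun a b c => - g a b c) y0 y1 y2 = - pd d g y0 y1 y2.
Proof.
  intro. rewrite neg_as_mult, pd_mult, pd_const by (try apply has_pd_const; assumption). ring.
Qed.

Lemma pd_minus d g h y0 y1 y2 : has_pd d g -> has_pd d h ->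
  pd d (fun a b c => g a b c - h a b c) y0 y1 y2 = pd d g y0 y1 y2 - pd d h y0 y1 y2.
Proof.
  intros. unfold Rminus. rewrite pd_plus, pd_opp by (try apply has_pd_opp; assumption).
  reflexivity.
Qed.

(** * Smooth functions of three variables *)

(** [Ck n g]: [g] has continuous partial derivatives of every order [<= n],
    and all partial derivatives of order [<= n + 1] exist. *)
Fixpoint Ck (n : nat) (g : F3) : Prop :=
  continuous3 g /\ (forall d, has_pd d g) /\
  match n with O => True | S k => forall d, Ck k (pd d g) end.

Lemma Ck_S n g : Ck (S n) g -> Ck n g.
Proof.
  revert g; induction n; intros g [H1 [H2 H3]]; simpl.
  - tauto.
  - split; [assumption | split; [assumption |]]. intro d. apply IHn, H3.
Qed.

Lemma pd_plus_fun d g h : has_pd d g -> has_pd d h ->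
  pd d (fun a b c => g a b c + h a b c) = (fun a b c => pd d g a b c + pd d h a b c).
Proof. intros. apply fun3_ext. intros. apply pd_plus; assumption. Qed.

Lemma pd_mult_fun d g h : has_pd d g -> has_pd d h ->
  pd d (fun a b c => g a b c * h a b c) =
  (fun a b c => pd d g a b c * h a b c + g a b c * pd d h a b c).
Proof. intros. apply fun3_ext. intros. apply pd_mult; assumption. Qed.

Lemma pd_const_fun d (c : R) : pd d (fun _ _ _ => c) = (fun _ _ _ => 0).
Proof. apply fun3_ext. intros. apply pd_const. Qed.

Lemma Ck_plus n : forall g h, Ck n g -> Ck n h -> Ck n (fun a b c => g a b c + h a b c).
Proof.
  induction n; intros g h [G1 [G2 G3]] [H1 [H2 H3]];
    (split; [apply continuous3_plus; auto | split; [intro; apply has_pd_plus; auto |]]).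
  - exact I.
  - intro d. rewrite pd_plus_fun by auto. apply IHn; auto.
Qed.

Lemma Ck_const n : forall c, Ck n (fun _ _ _ => c).
Proof.
  induction n; intro c;
    (split; [apply continuous3_const | split; [intro; apply has_pd_const |]]).
  - exact I.
  - intro d. rewrite pd_const_fun. apply IHn.
Qed.

Lemma Ck_mult n : forall g h, Ck n g -> Ck n h -> Ck n (fun a b c => g a b c * h a b c).
Proof.
  induction n; intros g h HG HH; pose proof HG as [G1 [G2 G3]]; pose proof HH as [H1 [H2 H3]];
    (split; [apply continuous3_mult; auto | split; [intro; apply has_pd_mult; auto |]]).
  - exact I.
  - intro d. rewrite pd_mult_fun by auto.
    apply Ck_plus; apply IHn; auto; apply Ck_S; assumption.
Qed.

Lemma iter_pd_app ds d g : iter_pd ds (pd d g) = iter_pd (ds ++ d :: nil) g.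
Proof. induction ds as [|d' ds IH]; simpl; [reflexivity | rewrite IH; reflexivity]. Qed.

Lemma smooth3_Ck n : forall g, smooth3 g -> Ck n g.
Proof.
  induction n; intros g H; (split; [apply (H nil) | split; [apply (H nil) |]]).
  - exact I.
  - intro d. apply IHn. intro ds. rewrite iter_pd_app. apply H.
Qed.

Lemma Ck_iter_pd ds : forall k g, Ck (k + length ds) g -> Ck k (iter_pd ds g).
Proof.
  induction ds as [|d ds IH]; intros k g H; simpl.
  - rewrite Nat.add_0_r in H; exact H.
  - simpl in H. rewrite Nat.add_succ_r in H.
    destruct (IH (S k) g H) as [_ [_ H3]]. apply H3.
Qed.

Lemma Ck_smooth3 g : (forall n, Ck n g) -> smooth3 g.
Proof. intros H ds. destruct (Ck_iter_pd ds 0 g (H _)) as [A1 [A2 _]]. auto. Qed.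

Lemma smooth3_plus g h : smooth3 g -> smooth3 h -> smooth3 (fun a b c => g a b c + h a b c).
Proof. intros. apply Ck_smooth3. intro n. apply Ck_plus; apply smooth3_Ck; assumption. Qed.

Lemma smooth3_mult g h : smooth3 g -> smooth3 h -> smooth3 (fun a b c => g a b c * h a b c).
Proof. intros. apply Ck_smooth3. intro n. apply Ck_mult; apply smooth3_Ck; assumption. Qed.

Lemma smooth3_const c : smooth3 (fun _ _ _ => c).
Proof. apply Ck_smooth3. intro n. apply Ck_const. Qed.

Lemma smooth3_opp g : smooth3 g -> smooth3 (fun a b c => - g a b c).
Proof. intro. rewrite neg_as_mult. apply smooth3_mult; [apply smooth3_const | assumption]. Qed.

Lemma smooth3_minus g h : smooth3 g -> smooth3 h -> smooth3 (fun a b c => g a b c - h a b c).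
Proof. intros. apply smooth3_plus; [|apply smooth3_opp]; assumption. Qed.

Lemma smooth3_pd d g : smooth3 g -> smooth3 (pd d g).
Proof. intros H ds. rewrite iter_pd_app. apply H. Qed.

Lemma smooth3_continuous g : smooth3 g -> continuous3 g.
Proof. intro H. apply (H nil). Qed.

Lemma smooth3_has_pd d g : smooth3 g -> has_pd d g.
Proof. intro H. apply (H nil). Qed.

Ltac smooth3_tac := repeat first [assumption | apply smooth3_const | apply smooth3_minus
  | apply smooth3_plus | apply smooth3_mult | apply smooth3_opp | apply smooth3_pd].

(** * Symmetry of second partial derivatives *)

Lemma schwarz_2d (h h1 h2 h12 h21 : R -> R -> R) :
  (forall x y, is_derive (fun z => h z y) x (h1 x y)) ->
  (forall x y, is_derive (fun z => h x z) y (h2 x y)) ->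
  (forall x y, is_derive (fun z => h2 z y) x (h21 x y)) ->
  (forall x y, is_derive (fun z => h1 x z) y (h12 x y)) ->
  C2 h21 -> C2 h12 -> forall x y, h21 x y = h12 x y.
Proof.
  intros D1 D2 D21 D12 C21 C12 x y.
  assert (F2 : forall w, (fun z => Derive (fun t => h z t) w) = (fun z => h2 z w)).
  { intro w. extensionality z. apply is_derive_unique, D2. }
  assert (F1 : forall w, (fun z => Derive (fun t => h t z) w) = (fun z => h1 w z)).
  { intro w. extensionality z. apply is_derive_unique, D1. }
  rewrite <- (is_derive_unique _ _ _ (D21 x y)), <- (is_derive_unique _ _ _ (D12 x y)).
  rewrite <- F2, <- F1. apply Schwarz.
  - exists (mkposreal 1 Rlt_0_1). intros u v _ _. rewrite F2, F1.
    repeat split; eexists; eauto.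
  - apply (continuity_2d_pt_ext h21); [|apply C21].
    intros u v. rewrite F2. symmetry; apply is_derive_unique, D21.
  - apply (continuity_2d_pt_ext h12); [|apply C12].
    intros u v. rewrite F1. symmetry; apply is_derive_unique, D12.
Qed.

Ltac schwarz_plane :=
  intros x y;
  lazymatch goal with
  | |- is_derive _ _ (pd ?d ?k _ _ _) => apply (is_derive_pd d k), smooth3_has_pd
  | |- continuity_2d_pt _ _ _ =>
      first [ apply continuous3_plane01 | apply continuous3_plane02
            | apply continuous3_plane12 ]; apply smooth3_continuous
  end;
  repeat apply smooth3_pd; assumption.

Lemma pd_comm01 g y0 y1 y2 : smooth3 g -> pd d0 (pd d1 g) y0 y1 y2 = pd d1 (pd d0 g) y0 y1 y2.
Proof.
  intro H. apply (schwarz_2d (fun x y => g x y y2) (fun x y => pd d0 g x y y2)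
    (fun x y => pd d1 g x y y2) (fun x y => pd d1 (pd d0 g) x y y2)
    (fun x y => pd d0 (pd d1 g) x y y2)); schwarz_plane.
Qed.

Lemma pd_comm02 g y0 y1 y2 : smooth3 g -> pd d0 (pd d2 g) y0 y1 y2 = pd d2 (pd d0 g) y0 y1 y2.
Proof.
  intro H. apply (schwarz_2d (fun x y => g x y1 y) (fun x y => pd d0 g x y1 y)
    (fun x y => pd d2 g x y1 y) (fun x y => pd d2 (pd d0 g) x y1 y)
    (fun x y => pd d0 (pd d2 g) x y1 y)); schwarz_plane.
Qed.

Lemma pd_comm12 g y0 y1 y2 : smooth3 g -> pd d1 (pd d2 g) y0 y1 y2 = pd d2 (pd d1 g) y0 y1 y2.
Proof.
  intro H. apply (schwarz_2d (fun x y => g y0 x y) (fun x y => pd d1 g y0 x y)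
    (fun x y => pd d2 g y0 x y) (fun x y => pd d2 (pd d1 g) y0 x y)
    (fun x y => pd d1 (pd d2 g) y0 x y)); schwarz_plane.
Qed.

Lemma pd_comm a b g y0 y1 y2 : smooth3 g -> pd a (pd b g) y0 y1 y2 = pd b (pd a g) y0 y1 y2.
Proof.
  intro H. destruct a, b; try reflexivity;
    first [ apply pd_comm01 | apply pd_comm02 | apply pd_comm12
          | symmetry; first [apply pd_comm01 | apply pd_comm02 | apply pd_comm12] ]; assumption.
Qed.

(** * One-dimensional Riemann integrals *)

Lemma ex_RInt_continuous_R (f : R -> R) a b : (forall z, continuous f z) -> ex_RInt f a b.
Proof. intro H. apply (ex_RInt_continuous (V := R_CompleteNormedModule)). intros; apply H. Qed.

(** Coquelicot's linearity lemmas, stated with the operations of [R] so that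
    they can be used for rewriting. *)
Lemma RInt_plus_R (f g : R -> R) a b : ex_RInt f a b -> ex_RInt g a b ->
  RInt (fun x => f x + g x) a b = RInt f a b + RInt g a b.
Proof. exact (RInt_plus f g a b). Qed.

Lemma RInt_minus_R (f g : R -> R) a b : ex_RInt f a b -> ex_RInt g a b ->
  RInt (fun x => f x - g x) a b = RInt f a b - RInt g a b.
Proof. exact (RInt_minus f g a b). Qed.

Lemma RInt_scal_R (f : R -> R) a b c : ex_RInt f a b ->
  RInt (fun x => c * f x) a b = c * RInt f a b.
Proof. exact (RInt_scal f a b c). Qed.

Lemma RInt_opp_R (f : R -> R) a b : ex_RInt f a b -> RInt (fun x => - f x) a b = - RInt f a b.
Proof. exact (RInt_opp f a b). Qed.

Lemma RInt_Chasles_R (f : R -> R) a b c : ex_RInt f a b -> ex_RInt f b c ->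
  RInt f a b + RInt f b c = RInt f a c.
Proof. exact (RInt_Chasles f a b c). Qed.

Lemma ex_RInt_minus_R (f g : R -> R) a b : ex_RInt f a b -> ex_RInt g a b ->
  ex_RInt (fun x => f x - g x) a b.
Proof. exact (ex_RInt_minus f g a b). Qed.

Lemma RInt_abs_bound (f : R -> R) a b M :
  (forall t, Rmin a b <= t <= Rmax a b -> Rabs (f t) <= M) -> ex_RInt f a b ->
  Rabs (RInt f a b) <= M * Rabs (b - a).
Proof.
  intros H Hex. destruct (Rle_dec a b) as [Hab|Hab].
  - rewrite Rmin_left, Rmax_right in H by lra.
    rewrite (Rabs_right (b - a)), Rmult_comm by lra. apply abs_RInt_le_const; auto.
  - rewrite Rmin_right, Rmax_left in H by lra.
    assert (Hex' : ex_RInt f b a) by (apply ex_RInt_swap; exact Hex).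
    rewrite <- (opp_RInt_swap f b a Hex'). change (Rabs (- RInt f b a) <= M * Rabs (b - a)).
    rewrite Rabs_Ropp, Rabs_minus_sym, (Rabs_right (a - b)), Rmult_comm by lra.
    apply abs_RInt_le_const; [lra | exact Hex' | exact H].
Qed.

Lemma continuous_bounded (g : R -> R) a b : (forall z, continuous g z) ->
  exists M, 0 < M /\ forall t, a <= t <= b -> Rabs (g t) <= M.
Proof.
  intro Hg. destruct (Rle_dec a b) as [Hab|Hab].
  - destruct (continuity_ab_maj (fun t => Rabs (g t)) a b Hab) as [t0 [Ht0 _]].
    { intros c _. apply continuity_pt_filterlim, (continuous_comp g Rabs);
        [apply Hg | apply continuous_Rabs]. }
    exists (Rabs (g t0) + 1). split; [pose proof (Rabs_pos (g t0)); lra|].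
    intros t Ht. specialize (Ht0 t Ht). lra.
  - exists 1. split; [lra|]. intros t Ht. lra.
Qed.

Lemma continuous_eps_delta (f : R -> R) x : continuous f x ->
  forall e, 0 < e -> exists d, 0 < d /\ forall y, Rabs (y - x) < d -> Rabs (f y - f x) < e.
Proof.
  intros H e He. destruct (proj2 (continuity_pt_filterlim f x) H e He) as [d [Hd Hy]].
  exists d; split; [exact Hd|]. intros y Hy'. destruct (Req_dec y x) as [->|Hne].
  - rewrite Rminus_diag, Rabs_R0; exact He.
  - apply (Hy y); split; [split; [exact I | auto] | exact Hy'].
Qed.

Lemma RInt_sym_diff_bound (g1 g0 : R -> R) a1 a0 Rad e M :
  0 <= a1 <= Rad -> 0 <= a0 <= Rad ->
  (forall z, continuous g1 z) -> (forall z, continuous g0 z) ->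
  (forall t, - a1 <= t <= a1 -> Rabs (g1 t - g0 t) <= e) ->
  (forall t, - Rad <= t <= Rad -> Rabs (g0 t) <= M) ->
  Rabs (RInt g1 (- a1) a1 - RInt g0 (- a0) a0) <= 2 * Rad * e + 2 * M * Rabs (a1 - a0).
Proof.
  intros Ha1 Ha0 C1 C0 Hdiff HM.
  assert (E1 : forall a b, ex_RInt g1 a b) by (intros; apply ex_RInt_continuous_R, C1).
  assert (E0 : forall a b, ex_RInt g0 a b) by (intros; apply ex_RInt_continuous_R, C0).
  assert (Split : RInt g1 (- a1) a1 - RInt g0 (- a0) a0 =
     RInt (fun t => g1 t - g0 t) (- a1) a1 + (RInt g0 (- a1) (- a0) + RInt g0 a0 a1)).
  { rewrite RInt_minus_R by auto.
    rewrite <- (RInt_Chasles_R g0 (- a1) (- a0) a1), <- (RInt_Chasles_R g0 (- a0) a0 a1)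
      by auto. ring. }
  assert (Bd : Rabs (RInt (fun t => g1 t - g0 t) (- a1) a1) <= e * Rabs (a1 - - a1)).
  { apply RInt_abs_bound; [|apply ex_RInt_minus_R; auto].
    intros t Ht. apply Hdiff. rewrite Rmin_left, Rmax_right in Ht by lra. exact Ht. }
  assert (He : 0 <= e) by (apply Rle_trans with (Rabs (g1 0 - g0 0)); [apply Rabs_pos | apply Hdiff; lra]).
  assert (HM0 : 0 <= M) by (apply Rle_trans with (Rabs (g0 0)); [apply Rabs_pos | apply HM; lra]).
  assert (Bl : forall u v, - Rad <= u <= Rad -> - Rad <= v <= Rad ->
     Rabs (RInt g0 u v) <= M * Rabs (v - u)).
  { intros u v Hu Hv. apply RInt_abs_bound; auto. intros t Ht. apply HM.
    split; [apply Rle_trans with (Rmin u v) | apply Rle_trans with (Rmax u v)];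
      try apply Ht; [apply Rmin_glb | apply Rmax_lub]; lra. }
  assert (B2 := Bl (- a1) (- a0) ltac:(lra) ltac:(lra)).
  assert (B3 := Bl a0 a1 ltac:(lra) ltac:(lra)).
  replace (- a0 - - a1) with (a1 - a0) in B2 by ring.
  rewrite (Rabs_right (a1 - - a1)) in Bd by lra.
  assert (e * (a1 - - a1) <= 2 * Rad * e) by nra.
  rewrite Split. eapply Rle_trans; [apply Rabs_triang|].
  pose proof (Rabs_triang (RInt g0 (- a1) (- a0)) (RInt g0 a0 a1)). lra.
Qed.

(** * Integrals over the disc *)

(** The disc [B(Rad)] meets the line [{y1} x R] in [-chord, chord]. *)
Definition chord (Rad y : R) : R := sqrt (Rad ^ 2 - y ^ 2).

Definition chord_RInt (Rad : R) (h : R -> R -> R) (y1 : R) : R :=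
  RInt (h y1) (- chord Rad y1) (chord Rad y1).

Definition disc_RInt (Rad : R) (h : R -> R -> R) : R := RInt (chord_RInt Rad h) (- Rad) Rad.

Lemma chord_nonneg Rad y : 0 <= chord Rad y.
Proof. apply sqrt_pos. Qed.

Lemma chord_le Rad y : 0 < Rad -> chord Rad y <= Rad.
Proof.
  intro H. unfold chord. rewrite <- (sqrt_pow2 Rad) at 2 by lra.
  apply sqrt_le_1_alt. pose proof (pow2_ge_0 y). lra.
Qed.

Lemma chord_continuous Rad y : continuous (chord Rad) y.
Proof.
  unfold chord. apply continuous_sqrt_comp, continuity_pt_filterlim.
  apply continuity_pt_minus.
  - apply continuity_pt_const. intros a b; reflexivity.
  - apply derivable_continuous_pt, derivable_pt_pow.
Qed.

Lemma chord_end Rad : chord Rad Rad = 0 /\ chord Rad (- Rad) = 0.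
Proof.
  unfold chord. replace (Rad ^ 2 - Rad ^ 2) with 0 by ring.
  replace (Rad ^ 2 - (- Rad) ^ 2) with 0 by ring. rewrite sqrt_0. auto.
Qed.

Lemma chord_derive Rad x : Rabs x < Rad -> is_derive (chord Rad) x (- x / chord Rad x).
Proof.
  intro H. assert (Q : 0 < Rad ^ 2 - x ^ 2).
  { rewrite <- (pow2_abs x). pose proof (Rabs_pos x). simpl. nra. }
  assert (Q2 : 0 < chord Rad x) by (apply sqrt_lt_R0; exact Q).
  unfold chord in *. auto_derive; [simpl in Q; lra|].
  replace (Rad * (Rad * 1) + - (x * (x * 1))) with (Rad ^ 2 - x ^ 2) by ring. field. lra.
Qed.

Lemma chord_RInt_continuity_2d Rad (k : F3) s0 y0 : 0 < Rad -> continuous3 k ->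
  continuity_2d_pt (fun s y1 => chord_RInt Rad (k s) y1) s0 y0.
Proof.
  intros HR Hk eps.
  pose proof (cond_pos eps) as Heps.
  destruct (continuous_bounded (k s0 y0) (- Rad) Rad) as [M [HM HMb]].
  { intro; apply continuous3_line2, Hk. }
  destruct (continuous3_uniform2 k s0 y0 (- Rad) Rad (eps / (4 * (Rad + 1))) Hk)
    as [d1 [Hd1 Hu]]; [apply Rdiv_lt_0_compat; lra|].
  destruct (continuous_eps_delta (chord Rad) y0 (chord_continuous Rad y0) (eps / (4 * M)))
    as [d2 [Hd2 Hs]]; [apply Rdiv_lt_0_compat; lra|].
  exists (mkposreal _ (Rmin_pos _ _ Hd1 Hd2)). intros s y1 Hs1 Hy1. simpl in Hs1, Hy1.
  pose proof (Rmin_l d1 d2); pose proof (Rmin_r d1 d2).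
  assert (Ha1 := conj (chord_nonneg Rad y1) (chord_le Rad y1 HR)).
  assert (Ha0 := conj (chord_nonneg Rad y0) (chord_le Rad y0 HR)).
  assert (Hb := RInt_sym_diff_bound (k s y1) (k s0 y0) _ _ Rad (eps / (4 * (Rad + 1))) M
    Ha1 Ha0 ltac:(intro; apply continuous3_line2, Hk) ltac:(intro; apply continuous3_line2, Hk)
    ltac:(intros t Ht; left; apply Hu; lra) HMb).
  assert (Hc := Hs y1 ltac:(lra)).
  assert (2 * Rad * (eps / (4 * (Rad + 1))) < eps / 2).
  { apply Rmult_lt_reg_r with (4 * (Rad + 1)); [lra|].
    field_simplify; [nra | lra]. }
  assert (2 * M * Rabs (chord Rad y1 - chord Rad y0) < eps / 2).
  { apply Rlt_le_trans with (2 * M * (eps / (4 * M))); [apply Rmult_lt_compat_l; lra|].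
    right; field; lra. }
  unfold chord_RInt. lra.
Qed.

Lemma chord_RInt_continuous Rad (h : R -> R -> R) y : 0 < Rad -> C2 h ->
  continuous (chord_RInt Rad h) y.
Proof.
  intros HR H.
  apply (continuity_2d_line2 (fun (_ : R) y1 => chord_RInt Rad h y1) 0 y).
  apply (chord_RInt_continuity_2d Rad (fun _ a b => h a b)); [exact HR|].
  apply continuous3_static, H.
Qed.

Lemma ex_RInt_chord Rad (h : R -> R -> R) a b : 0 < Rad -> C2 h ->
  ex_RInt (chord_RInt Rad h) a b.
Proof. intros. apply ex_RInt_continuous_R. intro. apply chord_RInt_continuous; assumption. Qed.

Lemma RInt_param_continuous (J : R -> R -> R) a b s0 : a <= b ->
  (forall s y, continuity_2d_pt J s y) -> continuous (fun s => RInt (J s) a b) s0.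
Proof.
  intros Hab HJ. apply continuity_pt_filterlim. intros e He.
  assert (He' : 0 < e / (b - a + 1)) by (apply Rdiv_lt_0_compat; lra).
  destruct (uniform_continuity_2d_1d (fun y s => J s y) a b s0) with (eps := mkposreal _ He')
    as [del Hdel]; [intros x _; apply continuity_2d_swap, HJ|].
  exists del. split; [apply cond_pos|]. intros s [_ Hs]. simpl in Hs |- *. unfold R_dist in *.
  assert (Ex : forall s', ex_RInt (J s') a b).
  { intro. apply ex_RInt_continuous_R. intro. apply continuity_2d_line2, HJ. }
  unfold Rdist. rewrite <- RInt_minus_R by auto.
  eapply Rle_lt_trans; [apply RInt_abs_bound with (M := e / (b - a + 1))|].
  - intros t Ht. rewrite Rmin_left, Rmax_right in Ht by lra. left.
    apply (Hdel t s0 t s); try (split; pose proof (cond_pos del); lra); auto.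
    + apply Rabs_def2 in Hs. split; lra.
    + rewrite Rminus_diag, Rabs_R0; apply cond_pos.
  - apply ex_RInt_minus_R; auto.
  - rewrite Rabs_right by lra.
    apply Rlt_le_trans with (e / (b - a + 1) * (b - a + 1)).
    + apply Rmult_lt_compat_l; lra.
    + right; field; lra.
Qed.

Lemma disc_RInt_continuous Rad (k : F3) s0 : 0 < Rad -> continuous3 k ->
  continuous (fun s => disc_RInt Rad (k s)) s0.
Proof.
  intros HR Hk. apply (RInt_param_continuous (fun s y1 => chord_RInt Rad (k s) y1)); [lra|].
  intros; apply chord_RInt_continuity_2d; assumption.
Qed.

Lemma disc_RInt_ext Rad (g h : R -> R -> R) :
  (forall a b, g a b = h a b) -> disc_RInt Rad g = disc_RInt Rad h.
Proof. intro E. f_equal. extensionality a; extensionality b; apply E. Qed.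

Lemma disc_RInt_plus Rad (g h : R -> R -> R) : 0 < Rad -> C2 g -> C2 h ->
  disc_RInt Rad (fun a b => g a b + h a b) = disc_RInt Rad g + disc_RInt Rad h.
Proof.
  intros HR G H. unfold disc_RInt.
  rewrite (RInt_ext _ (fun y => chord_RInt Rad g y + chord_RInt Rad h y)).
  - apply RInt_plus_R; apply ex_RInt_chord; assumption.
  - intros. apply RInt_plus_R; apply ex_RInt_continuous_R, C2_line; assumption.
Qed.

Lemma disc_RInt_minus Rad (g h : R -> R -> R) : 0 < Rad -> C2 g -> C2 h ->
  disc_RInt Rad (fun a b => g a b - h a b) = disc_RInt Rad g - disc_RInt Rad h.
Proof.
  intros HR G H. unfold disc_RInt.
  rewrite (RInt_ext _ (fun y => chord_RInt Rad g y - chord_RInt Rad h y)).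
  - apply RInt_minus_R; apply ex_RInt_chord; assumption.
  - intros. apply RInt_minus_R; apply ex_RInt_continuous_R, C2_line; assumption.
Qed.

Lemma disc_RInt_scal Rad c (h : R -> R -> R) : 0 < Rad -> C2 h ->
  disc_RInt Rad (fun a b => c * h a b) = c * disc_RInt Rad h.
Proof.
  intros HR H. unfold disc_RInt.
  rewrite (RInt_ext _ (fun y => c * chord_RInt Rad h y)).
  - apply RInt_scal_R, ex_RInt_chord; assumption.
  - intros. apply RInt_scal_R, ex_RInt_continuous_R, C2_line; assumption.
Qed.

Lemma in_disc Rad x t : 0 < Rad -> Rabs x <= Rad -> Rabs t <= chord Rad x ->
  sqrt (x ^ 2 + t ^ 2) <= Rad.
Proof.
  intros HR Hx Ht.
  assert (Q : 0 <= Rad ^ 2 - x ^ 2).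
  { rewrite <- (pow2_abs x). pose proof (Rabs_pos x). simpl. nra. }
  assert (t ^ 2 <= Rad ^ 2 - x ^ 2).
  { rewrite <- (pow2_abs t), <- (pow2_sqrt (Rad ^ 2 - x ^ 2)) by exact Q.
    pose proof (Rabs_pos t). fold (chord Rad x). simpl. nra. }
  rewrite <- (sqrt_pow2 Rad) by lra. apply sqrt_le_1_alt. lra.
Qed.

Lemma disc_RInt_abs_le Rad (h g : R -> R -> R) : 0 < Rad -> C2 h -> C2 g ->
  (forall a b, sqrt (a ^ 2 + b ^ 2) <= Rad -> Rabs (h a b) <= g a b) ->
  Rabs (disc_RInt Rad h) <= disc_RInt Rad g.
Proof.
  intros HR Hh Hg Hb.
  assert (Abs : forall (u : R -> R) z, continuous u z -> continuous (fun x => Rabs (u x)) z).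
  { intros u z Hu. apply (continuous_comp u Rabs); [exact Hu | apply continuous_Rabs]. }
  unfold disc_RInt. eapply Rle_trans; [apply abs_RInt_le; [lra | apply ex_RInt_chord; auto]|].
  apply RInt_le; [lra | | apply ex_RInt_chord; auto |].
  { apply ex_RInt_continuous_R. intro. apply Abs, chord_RInt_continuous; auto. }
  intros x Hx. unfold chord_RInt. pose proof (chord_nonneg Rad x).
  eapply Rle_trans; [apply abs_RInt_le; [lra | apply ex_RInt_continuous_R, C2_line; auto]|].
  apply RInt_le; [lra | | apply ex_RInt_continuous_R, C2_line; auto |].
  { apply ex_RInt_continuous_R. intro. apply Abs, C2_line; auto. }
  intros t Ht. apply Hb, in_disc; auto; apply Rabs_le; lra.
Qed.

Lemma RI_RInt (g : R -> R) a b : ex_RInt g a b -> RI g a b = RInt g a b.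
Proof.
  intro H. unfold RI. destruct (excluded_middle_informative _) as [E|E].
  - symmetry. apply RInt_Reals.
  - exfalso. apply E. exists (ex_RInt_Reals_0 _ _ _ H). exact I.
Qed.

Lemma disc_int_RInt Rad (h : R -> R -> R) : 0 < Rad -> C2 h -> disc_int Rad h = disc_RInt Rad h.
Proof.
  intros HR Hh. unfold disc_int.
  replace (fun y1 => RI (fun y2 => h y1 y2) (- sqrt (Rad ^ 2 - y1 ^ 2)) (sqrt (Rad ^ 2 - y1 ^ 2)))
    with (chord_RInt Rad h).
  - apply RI_RInt, ex_RInt_chord; assumption.
  - extensionality y1. symmetry. apply RI_RInt, ex_RInt_continuous_R, C2_line, Hh.
Qed.

Lemma chord_RInt_derive_time Rad (k kd : F3) u t : continuous3 k -> continuous3 kd ->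
  (forall s a b, derivable_pt_lim (fun z => k z a b) s (kd s a b)) ->
  is_derive (fun z => chord_RInt Rad (k z) t) u (chord_RInt Rad (kd u) t).
Proof.
  intros Hk Hkd HD. unfold chord_RInt.
  assert (DE : forall z v, Derive (fun w => k w t v) z = kd z t v).
  { intros. apply is_derive_unique, is_derive_Reals, HD. }
  rewrite <- (RInt_ext (fun y2 => Derive (fun w => k w t y2) u)) by (intros; apply DE).
  apply (is_derive_RInt_param (fun z y2 => k z t y2)).
  - apply filter_forall. intros x0 y2 _. exists (kd x0 t y2). apply is_derive_Reals, HD.
  - intros y2 _. apply (continuity_2d_pt_ext (fun z v => kd z t v)).
    + intros; rewrite DE; reflexivity.
    + apply continuous3_plane02, Hkd.
  - apply filter_forall. intro y. apply ex_RInt_continuous_R. intro.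
    apply continuous3_line2, Hk.
Qed.

Lemma disc_RInt_derive_time Rad (k kd : F3) s : 0 < Rad -> continuous3 k -> continuous3 kd ->
  (forall s a b, derivable_pt_lim (fun z => k z a b) s (kd s a b)) ->
  is_derive (fun z => disc_RInt Rad (k z)) s (disc_RInt Rad (kd s)).
Proof.
  intros HR Hk Hkd HD. unfold disc_RInt.
  assert (DE : forall z v, Derive (fun w => chord_RInt Rad (k w) v) z = chord_RInt Rad (kd z) v).
  { intros. apply is_derive_unique, chord_RInt_derive_time; assumption. }
  rewrite <- (RInt_ext (fun y1 => Derive (fun w => chord_RInt Rad (k w) y1) s))
    by (intros; apply DE).
  apply (is_derive_RInt_param (fun z y1 => chord_RInt Rad (k z) y1)).
  - apply filter_forall. intros x0 y1 _. exists (chord_RInt Rad (kd x0) y1).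
    apply chord_RInt_derive_time; assumption.
  - intros y1 _. apply (continuity_2d_pt_ext (fun z v => chord_RInt Rad (kd z) v)).
    + intros; rewrite DE; reflexivity.
    + apply chord_RInt_continuity_2d; assumption.
  - apply filter_forall. intro y. apply ex_RInt_chord; [exact HR | apply C2_time_slice, Hk].
Qed.

Lemma disc_RInt_FTC Rad (k kd : F3) t : 0 < Rad -> continuous3 k -> continuous3 kd ->
  (forall s a b, derivable_pt_lim (fun z => k z a b) s (kd s a b)) ->
  disc_RInt Rad (k t) - disc_RInt Rad (k 0) = RInt (fun s => disc_RInt Rad (kd s)) 0 t.
Proof.
  intros HR Hk Hkd HD. symmetry. apply is_RInt_unique.
  apply (is_RInt_derive (V := R_CompleteNormedModule) (fun z => disc_RInt Rad (k z))).
  - intros; apply disc_RInt_derive_time; assumption.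
  - intros; apply disc_RInt_continuous; assumption.
Qed.

(** * The radial cut-off [f(|y|)] *)

Definition norm2 (a b : R) : R := sqrt (a ^ 2 + b ^ 2).

Lemma norm2_sym a b : norm2 a b = norm2 b a.
Proof. unfold norm2. f_equal. ring. Qed.

Lemma norm2_nonneg a b : 0 <= norm2 a b.
Proof. apply sqrt_pos. Qed.

Lemma norm2_sqr a b : norm2 a b ^ 2 = a ^ 2 + b ^ 2.
Proof. apply pow2_sqrt. pose proof (pow2_ge_0 a); pose proof (pow2_ge_0 b); lra. Qed.

Lemma abs_le_norm2 a b : Rabs b <= norm2 a b.
Proof.
  unfold norm2. rewrite <- sqrt_Rsqr_abs. apply sqrt_le_1_alt. unfold Rsqr.
  pose proof (pow2_ge_0 a). lra.
Qed.

Lemma norm2_pos a b : a <> 0 \/ b <> 0 -> 0 < norm2 a b.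
Proof.
  intro H. unfold norm2. apply sqrt_lt_R0.
  pose proof (pow2_ge_0 a); pose proof (pow2_ge_0 b).
  destruct H as [H|H]; [pose proof (pow2_gt_0 a H) | pose proof (pow2_gt_0 b H)]; lra.
Qed.

Lemma norm2_le_abs_sum a b : norm2 a b <= Rabs a + Rabs b.
Proof.
  unfold norm2. pose proof (Rabs_pos a); pose proof (Rabs_pos b).
  rewrite <- (sqrt_Rsqr (Rabs a + Rabs b)) by lra. apply sqrt_le_1_alt. unfold Rsqr.
  rewrite <- (pow2_abs a), <- (pow2_abs b). simpl. nra.
Qed.

Lemma norm2_continuity x y : continuity_2d_pt norm2 x y.
Proof.
  unfold norm2. apply continuity_1d_2d_pt_comp.
  - apply continuity_pt_filterlim, continuous_sqrt.
  - apply continuity_2d_pt_plus; simpl; apply continuity_2d_pt_mult;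
      try apply continuity_2d_pt_mult; try apply continuity_2d_pt_const;
      try apply continuity_2d_pt_id1; try apply continuity_2d_pt_id2.
Qed.

Lemma norm2_chord_end Rad a : 0 < Rad -> Rabs a <= Rad ->
  norm2 a (chord Rad a) = Rad /\ norm2 a (- chord Rad a) = Rad.
Proof.
  intros HR Ha. unfold norm2, chord.
  assert (Q : 0 <= Rad ^ 2 - a ^ 2).
  { rewrite <- (pow2_abs a). pose proof (Rabs_pos a). simpl. nra. }
  replace ((- sqrt (Rad ^ 2 - a ^ 2)) ^ 2) with (sqrt (Rad ^ 2 - a ^ 2) ^ 2) by ring.
  rewrite pow2_sqrt by exact Q.
  replace (a ^ 2 + (Rad ^ 2 - a ^ 2)) with (Rad ^ 2) by ring. rewrite sqrt_pow2 by lra. auto.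
Qed.

(** The hypotheses on [f] actually used: [f] is [C^1], [f(Rad) = 0] and
    [|f'(r)| <= Cf r^2] on [[0, Rad]]. *)
Record cutoff (Rad Cf : R) (f : R -> R) : Prop := {
  cutoff_derivable : forall x, derivable_pt_lim f x (deriv1 f x);
  cutoff_deriv_continuous : forall x, continuity_pt (deriv1 f) x;
  cutoff_deriv_bound : forall r, 0 <= r <= Rad -> Rabs (deriv1 f r) <= Cf * r ^ 2;
  cutoff_Cf_nonneg : 0 <= Cf;
  cutoff_boundary : f Rad = 0 }.

Lemma smooth_cutoff Rad f : smooth1 f -> f Rad = 0 ->
  (exists Cf, forall r l, 0 <= r <= Rad -> derivable_pt_lim f r l -> - Cf * r ^ 2 <= l <= 0) ->
  exists Cf, cutoff Rad Cf f.
Proof.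
  intros Hs HfR [C0 HC].
  assert (D : forall x, derivable_pt_lim f x (deriv1 f x)).
  { intro x. destruct (Hs 0%nat x) as [l Hl]. simpl in Hl. rewrite (deriv1_spec _ _ _ Hl). exact Hl. }
  exists (Rabs C0). split; auto.
  - intro x. destruct (Hs 1%nat x) as [l Hl]. apply derivable_continuous_pt. exists l. exact Hl.
  - intros r Hr. destruct (HC r (deriv1 f r) Hr (D r)) as [A B].
    rewrite Rabs_left1 by lra.
    assert (C0 * r ^ 2 <= Rabs C0 * r ^ 2) by (apply Rmult_le_compat_r; [apply pow2_ge_0 | apply RRle_abs]).
    lra.
  - apply Rabs_pos.
Qed.

Lemma small_quadratic Cf eps x : 0 <= Cf -> 0 < eps -> 0 <= x < 1 -> x < eps / (Cf + 1) ->
  Cf * x ^ 2 < eps.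
Proof.
  intros HC He Hx1 Hx2.
  apply Rle_lt_trans with (Cf * (eps / (Cf + 1))).
  - apply Rmult_le_compat_l; [exact HC|]. simpl. nra.
  - apply Rmult_lt_reg_r with (Cf + 1); [lra|]. field_simplify; lra.
Qed.

(** [radial_grad f a b] is the derivative of [f(|(a, b)|)] in [b]; the
    derivative in [a] is [radial_grad f b a]. *)
Definition radial_grad (f : R -> R) (a b : R) : R := deriv1 f (norm2 a b) * b / norm2 a b.

Section RadialCutoff.

Variables (Rad Cf : R) (f : R -> R).
Hypothesis HR : 0 < Rad.
Hypothesis Hf : cutoff Rad Cf f.

Lemma radial_grad_bound a b : norm2 a b <= Rad ->
  Rabs (radial_grad f a b) <= Cf * norm2 a b ^ 2.
Proof.
  intro Hr. unfold radial_grad. pose proof (cutoff_Cf_nonneg _ _ _ Hf).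
  destruct (Req_dec (norm2 a b) 0) as [E|E].
  - rewrite E. unfold Rdiv. rewrite Rinv_0, Rmult_0_r, Rabs_R0. simpl. lra.
  - assert (Hp : 0 < norm2 a b) by (pose proof (norm2_nonneg a b); lra).
    unfold Rdiv. rewrite !Rabs_mult, Rabs_inv, (Rabs_right (norm2 a b)) by lra.
    assert (H1 : Rabs b * / norm2 a b <= 1).
    { apply (Rmult_le_reg_r (norm2 a b)); [exact Hp|].
      rewrite Rmult_assoc, Rinv_l by lra. pose proof (abs_le_norm2 a b). lra. }
    pose proof (cutoff_deriv_bound _ _ _ Hf (norm2 a b) (conj (norm2_nonneg a b) Hr)).
    rewrite Rmult_assoc.
    apply Rle_trans with (Rabs (deriv1 f (norm2 a b)) * 1); [|lra].
    apply Rmult_le_compat_l; [apply Rabs_pos | exact H1].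
Qed.

Lemma radial_grad_origin b : radial_grad f 0 0 = 0 /\ radial_grad f b 0 = 0.
Proof. unfold radial_grad, Rdiv. split; ring. Qed.

(** At the origin the derivative of [f(|(0, b)|) = f(|b|)] vanishes, because
    [f'(r) = O(r^2)]. *)
Lemma cutoff_radial_derive_origin :
  derivable_pt_lim (fun t => f (norm2 0 t)) 0 (radial_grad f 0 0).
Proof.
  rewrite (proj1 (radial_grad_origin 0)). intros eps He.
  pose proof (cutoff_Cf_nonneg _ _ _ Hf) as HC.
  set (m := Rmin Rad (Rmin 1 (eps / (Cf + 1)))).
  assert (Hm : 0 < m) by (apply Rmin_pos; [lra | apply Rmin_pos; [lra | apply Rdiv_lt_0_compat; lra]]).
  assert (m1 : m <= Rad) by apply Rmin_l.
  assert (m2 : m <= 1) by (eapply Rle_trans; [apply Rmin_r | apply Rmin_l]).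
  assert (m3 : m <= eps / (Cf + 1)) by (eapply Rle_trans; [apply Rmin_r | apply Rmin_r]).
  exists (mkposreal m Hm). intros h Hh Hlt. simpl in Hlt.
  assert (E : forall t, norm2 0 t = Rabs t).
  { intro t. unfold norm2. rewrite <- sqrt_Rsqr_abs. f_equal. unfold Rsqr; ring. }
  rewrite Rplus_0_l, !E, Rabs_R0.
  set (x := Rabs h). assert (Hxp : 0 < x) by (apply Rabs_pos_lt; exact Hh).
  destruct (MVT_cor2 f (deriv1 f) 0 x Hxp) as [c [Ec Hc]];
    [intros; apply (cutoff_derivable _ _ _ Hf)|].
  rewrite Ec, !Rminus_0_r.
  replace (deriv1 f c * x / h) with (deriv1 f c * (x / h)) by (unfold Rdiv; ring).
  unfold Rdiv. rewrite !Rabs_mult, Rabs_inv. fold x.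
  rewrite (Rabs_right x), Rinv_r, Rmult_1_r by lra.
  unfold x in *.
  eapply Rle_lt_trans; [apply (cutoff_deriv_bound _ _ _ Hf); lra|].
  apply small_quadratic; lra.
Qed.

Lemma cutoff_radial_derive2 a b :
  derivable_pt_lim (fun t => f (norm2 a t)) b (radial_grad f a b).
Proof.
  destruct (Req_dec a 0) as [Ha|Ha]; [destruct (Req_dec b 0) as [Hb|Hb]|].
  1: subst; apply cutoff_radial_derive_origin.
  all: assert (P : 0 < norm2 a b) by (apply norm2_pos; auto).
  all: assert (P2 : 0 < a ^ 2 + b ^ 2) by (rewrite <- norm2_sqr; apply pow2_gt_0; lra).
  all: apply is_derive_Reals.
  all: assert (D1 : is_derive (fun t => norm2 a t) b (b / norm2 a b)) by
    (unfold norm2 in *; auto_derive; [simpl in P2; nra |];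
     replace (a * (a * 1) + b * (b * 1)) with (a ^ 2 + b ^ 2) by ring; field; lra).
  all: assert (D2 := is_derive_comp f (norm2 a) b _ _
         (proj2 (is_derive_Reals _ _ _) (cutoff_derivable _ _ _ Hf (norm2 a b))) D1).
  all: replace (radial_grad f a b) with (scal (b / norm2 a b) (deriv1 f (norm2 a b)));
         [exact D2 | unfold radial_grad, scal; simpl; unfold mult; simpl; field; lra].
Qed.

Lemma cutoff_radial_derive1 a b :
  derivable_pt_lim (fun t => f (norm2 t b)) a (radial_grad f b a).
Proof.
  assert (E : (fun t => f (norm2 t b)) = (fun t => f (norm2 b t))).
  { extensionality t. rewrite norm2_sym. reflexivity. }
  rewrite E. apply cutoff_radial_derive2.
Qed.

Lemma cutoff_radial_continuous : C2 (fun a b => f (norm2 a b)).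
Proof.
  intros x y. apply continuity_1d_2d_pt_comp; [|apply norm2_continuity].
  apply derivable_continuous_pt. eexists. apply (cutoff_derivable _ _ _ Hf).
Qed.

Lemma radial_grad_continuous_origin : continuity_2d_pt (radial_grad f) 0 0.
Proof.
  intro eps. pose proof (cond_pos eps). pose proof (cutoff_Cf_nonneg _ _ _ Hf).
  set (m := Rmin Rad (Rmin 1 (eps / (Cf + 1)))).
  assert (Hm : 0 < m) by (apply Rmin_pos; [lra | apply Rmin_pos; [lra | apply Rdiv_lt_0_compat; lra]]).
  assert (m1 : m <= Rad) by apply Rmin_l.
  assert (m2 : m <= 1) by (eapply Rle_trans; [apply Rmin_r | apply Rmin_l]).
  assert (m3 : m <= eps / (Cf + 1)) by (eapply Rle_trans; [apply Rmin_r | apply Rmin_r]).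
  exists (mkposreal (m / 2) ltac:(lra)). intros u v Hu Hv. simpl in Hu, Hv.
  rewrite !Rminus_0_r in Hu, Hv. rewrite (proj1 (radial_grad_origin 0)), Rminus_0_r.
  pose proof (norm2_le_abs_sum u v). pose proof (norm2_nonneg u v).
  eapply Rle_lt_trans; [apply radial_grad_bound; lra|].
  apply small_quadratic; lra.
Qed.

Lemma radial_grad_continuous : C2 (radial_grad f).
Proof.
  intros x y. destruct (Req_dec x 0) as [Hx|Hx]; [destruct (Req_dec y 0) as [Hy|Hy]|].
  1: subst; apply radial_grad_continuous_origin.
  all: assert (P : 0 < norm2 x y) by (apply norm2_pos; auto).
  all: unfold radial_grad, Rdiv; apply continuity_2d_pt_mult; [apply continuity_2d_pt_mult|].
  all: try apply continuity_2d_pt_id2.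
  all: try (apply continuity_2d_pt_inv; [apply norm2_continuity | lra]).
  all: apply continuity_1d_2d_pt_comp; [apply (cutoff_deriv_continuous _ _ _ Hf) | apply norm2_continuity].
Qed.

Lemma radial_grad_swap_continuous : C2 (fun a b => radial_grad f b a).
Proof. apply C2_swap, radial_grad_continuous. Qed.

End RadialCutoff.

(** * Integration by parts on the disc *)

Lemma RInt_derive_open (H k : R -> R) a b : a < b ->
  (forall x, a < x < b -> is_derive H x (k x)) ->
  (forall x, a <= x <= b -> continuity_pt H x) -> (forall x, continuous k x) ->
  RInt k a b = H b - H a.
Proof.
  intros Hab HD HC Hk.
  assert (Prim : forall x, is_derive (fun x => RInt k a x) x (k x)).
  { intro x. apply (is_derive_RInt k (fun x => RInt k a x) a x); [|apply Hk].
    apply filter_forall. intro. apply (RInt_correct (V := R_CompleteNormedModule)).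
    apply ex_RInt_continuous_R, Hk. }
  set (G := fun x => H x - RInt k a x).
  destruct (MVT_gen G a b (fun _ => 0)) as [c [_ Hc]].
  - intros x Hx. rewrite Rmin_left, Rmax_right in Hx by lra.
    replace 0 with (minus (k x) (k x)) by (unfold minus, plus, opp; simpl; ring).
    apply (is_derive_minus H), Prim. apply HD, Hx.
  - intros x Hx. rewrite Rmin_left, Rmax_right in Hx by lra.
    apply continuity_pt_minus; [apply HC, Hx|].
    apply continuity_pt_filterlim, (ex_derive_continuous (fun x => RInt k a x)).
    eexists. apply Prim.
  - unfold G in Hc. rewrite RInt_point in Hc. unfold zero in Hc; simpl in Hc. lra.
Qed.

Section IntegrationByParts.

Variables (Rad Cf : R) (f : R -> R).
Hypothesis HR : 0 < Rad.
Hypothesis Hf : cutoff Rad Cf f.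

Let radial_C2 := cutoff_radial_continuous Rad Cf f Hf.
Let grad_C2 := radial_grad_continuous Rad Cf f HR Hf.
Let grad_swap_C2 := radial_grad_swap_continuous Rad Cf f HR Hf.
Let radial_d1 := cutoff_radial_derive1 Rad Cf f HR Hf.
Let radial_d2 := cutoff_radial_derive2 Rad Cf f HR Hf.

(** Along a chord, [\int f(|y|) d_2 X = - \int (d_2 f(|y|)) X]: the
    boundary terms vanish because the chord ends on the circle, where
    [f = 0]. *)
Lemma chord_RInt_ibp2 (X Xd : R -> R -> R) a : C2 X -> C2 Xd ->
  (forall a b, derivable_pt_lim (fun t => X a t) b (Xd a b)) -> Rabs a <= Rad ->
  chord_RInt Rad (fun a b => f (norm2 a b) * Xd a b) a =
  - chord_RInt Rad (fun a b => radial_grad f a b * X a b) a.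
Proof.
  intros HX HXd HD Ha. unfold chord_RInt. set (s := chord Rad a).
  set (k := fun a t => radial_grad f a t * X a t + f (norm2 a t) * Xd a t).
  assert (Ck : C2 k) by (apply C2_plus; apply C2_mult; assumption).
  assert (Hd : forall t, is_derive (fun t => f (norm2 a t) * X a t) t (k a t)).
  { intro t. apply is_derive_Reals.
    apply (derivable_pt_lim_mult (fun t => f (norm2 a t)) (fun t => X a t));
      [apply radial_d2 | apply HD]. }
  assert (E := is_RInt_derive (V := R_CompleteNormedModule) _ _ (- s) s
                 (fun x _ => Hd x) (fun x _ => C2_line k a Ck x)).
  apply is_RInt_unique in E.
  destruct (norm2_chord_end Rad a HR Ha) as [E1 E2]. fold s in E1, E2.
  simpl in E. unfold minus, plus, opp in E; simpl in E.
  rewrite E1, E2, (cutoff_boundary _ _ _ Hf) in E.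
  assert (Ex1 : ex_RInt (fun t => radial_grad f a t * X a t) (- s) s).
  { apply ex_RInt_continuous_R, (C2_line (fun a t => radial_grad f a t * X a t)), C2_mult;
      assumption. }
  assert (Ex2 : ex_RInt (fun t => f (norm2 a t) * Xd a t) (- s) s).
  { apply ex_RInt_continuous_R, (C2_line (fun a t => f (norm2 a t) * Xd a t)), C2_mult;
      assumption. }
  unfold k in E. rewrite RInt_plus_R in E by assumption. lra.
Qed.

(** The chord integral of [P = f(|y|) Y] has derivative [\int d_1 P] inside
    [(-Rad, Rad)]: the terms coming from the moving ends vanish since [f = 0]
    on the circle. *)
Lemma chord_RInt_derive1 (Y Yd : R -> R -> R) x : C2 Y -> C2 Yd ->
  (forall a b, derivable_pt_lim (fun t => Y t b) a (Yd a b)) -> Rabs x < Rad ->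
  is_derive (chord_RInt Rad (fun a b => f (norm2 a b) * Y a b)) x
    (chord_RInt Rad (fun a b => radial_grad f b a * Y a b + f (norm2 a b) * Yd a b) x).
Proof.
  intros HY HYd HD Hx.
  set (P := fun a b => f (norm2 a b) * Y a b).
  set (k := fun a b => radial_grad f b a * Y a b + f (norm2 a b) * Yd a b).
  assert (Ck : C2 k) by (apply C2_plus; apply C2_mult; assumption).
  assert (CP : C2 P) by (apply C2_mult; assumption).
  assert (DPd : forall u v, is_derive (fun z => P z v) u (k u v)).
  { intros u v. apply is_derive_Reals.
    apply (derivable_pt_lim_mult (fun z => f (norm2 z v)) (fun z => Y z v));
      [apply radial_d1 | apply HD]. }
  assert (DP : forall u v, Derive (fun z => P z v) u = k u v).
  { intros u v. apply is_derive_unique, DPd. }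
  assert (Ex : forall y a b, ex_RInt (P y) a b) by (intros; apply ex_RInt_continuous_R, C2_line, CP).
  destruct (norm2_chord_end Rad x HR ltac:(lra)) as [R1 R2].
  replace (chord_RInt Rad k x) with
    (RInt (fun t => Derive (fun u => P u t) x) (- chord Rad x) (chord Rad x)
     + - P x (- chord Rad x) * opp (- x / chord Rad x) + P x (chord Rad x) * (- x / chord Rad x)).
  - apply (is_derive_RInt_param_bound_comp P (fun x => - chord Rad x) (chord Rad) x).
    + apply filter_forall. intro; apply Ex.
    + exists (mkposreal 1 Rlt_0_1). apply filter_forall. intro; apply Ex.
    + exists (mkposreal 1 Rlt_0_1). apply filter_forall. intro; apply Ex.
    + exact (is_derive_opp _ _ _ (chord_derive Rad x Hx)).
    + apply chord_derive, Hx.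
    + exists (mkposreal 1 Rlt_0_1). apply filter_forall. intros x0 t _.
      exists (k x0 t). apply DPd.
    + intros t _. apply (continuity_2d_pt_ext k); [intros; rewrite DP; reflexivity | apply Ck].
    + exists (mkposreal 1 Rlt_0_1). intros u v _ _.
      apply (continuity_2d_pt_ext k); [intros; rewrite DP; reflexivity | apply Ck].
    + exists (mkposreal 1 Rlt_0_1). intros u v _ _.
      apply (continuity_2d_pt_ext k); [intros; rewrite DP; reflexivity | apply Ck].
    + apply continuity_pt_filterlim, C2_line, CP.
    + apply continuity_pt_filterlim, C2_line, CP.
  - unfold P at 2 3. rewrite R1, R2, (cutoff_boundary _ _ _ Hf). unfold chord_RInt.
    rewrite (RInt_ext _ (k x)) by (intros; apply DP). ring.
Qed.

Lemma disc_RInt_ibp1 (Y Yd : R -> R -> R) : C2 Y -> C2 Yd ->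
  (forall a b, derivable_pt_lim (fun t => Y t b) a (Yd a b)) ->
  disc_RInt Rad (fun a b => f (norm2 a b) * Yd a b) =
  - disc_RInt Rad (fun a b => radial_grad f b a * Y a b).
Proof.
  intros HY HYd HD.
  set (P := fun a b => f (norm2 a b) * Y a b).
  set (k := fun a b => radial_grad f b a * Y a b + f (norm2 a b) * Yd a b).
  assert (Ck : C2 k) by (apply C2_plus; apply C2_mult; assumption).
  assert (Zero : disc_RInt Rad k = 0).
  { unfold disc_RInt. rewrite (RInt_derive_open (chord_RInt Rad P)); [| lra | | |].
    - unfold chord_RInt. destruct (chord_end Rad) as [S1 S2].
      rewrite S1, S2, Ropp_0, !RInt_point. unfold zero; simpl. ring.
    - intros x Hx. apply chord_RInt_derive1; auto. apply Rabs_def1; lra.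
    - intros x _. apply continuity_pt_filterlim, chord_RInt_continuous; [exact HR|].
      apply C2_mult; assumption.
    - intro. apply chord_RInt_continuous; assumption. }
  unfold k in Zero. rewrite disc_RInt_plus in Zero by (auto; apply C2_mult; assumption).
  lra.
Qed.

Lemma disc_RInt_curl (X1 X2 X1d2 X2d1 : R -> R -> R) :
  C2 X1 -> C2 X2 -> C2 X1d2 -> C2 X2d1 ->
  (forall a b, derivable_pt_lim (fun t => X1 a t) b (X1d2 a b)) ->
  (forall a b, derivable_pt_lim (fun t => X2 t b) a (X2d1 a b)) ->
  disc_RInt Rad (fun a b => f (norm2 a b) * (X2d1 a b - X1d2 a b)) =
  disc_RInt Rad (fun a b => radial_grad f a b * X1 a b - radial_grad f b a * X2 a b).
Proof.
  intros C1 C2' C3 C4 D1 D2.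
  rewrite (disc_RInt_ext Rad _ (fun a b => f (norm2 a b) * X2d1 a b - f (norm2 a b) * X1d2 a b))
    by (intros; ring).
  rewrite !disc_RInt_minus by (auto; apply C2_mult; assumption).
  rewrite (disc_RInt_ibp1 X2 X2d1) by assumption.
  assert (E : disc_RInt Rad (fun a b => f (norm2 a b) * X1d2 a b) =
              - disc_RInt Rad (fun a b => radial_grad f a b * X1 a b)).
  { unfold disc_RInt. rewrite <- RInt_opp_R by (apply ex_RInt_chord; auto; apply C2_mult; assumption).
    apply RInt_ext. intros x Hx. rewrite Rmin_left, Rmax_right in Hx by lra.
    apply chord_RInt_ibp2; auto. apply Rabs_le; lra. }
  rewrite E. ring.
Qed.

End IntegrationByParts.

(** * Gauge algebra *)

Lemma smooth3_cA U d : smooth_config U -> smooth3 (cA U d).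
Proof. intros [H1 [H2 [H3 [H4 H5]]]]. destruct d; assumption. Qed.

Lemma smooth3_jc U d : smooth_config U -> smooth3 (jc U d).
Proof.
  intro H. pose proof H as [Hu [Hv _]]. pose proof (smooth3_cA U d H).
  unfold jc, Dre, Dim. smooth3_tac.
Qed.

Lemma smooth3_omega U : smooth_config U -> smooth3 (omega U).
Proof.
  intro H. pose proof (smooth3_jc U d1 H). pose proof (smooth3_jc U d2 H).
  pose proof (smooth3_cA U d1 H). pose proof (smooth3_cA U d2 H).
  unfold omega, Fc. smooth3_tac.
Qed.

(** [Xfield U k = d_0 j_k - d_k j_0 + F_0k]: the space-time current whose
    curl is [2 d_0 omega]. *)
Definition Xfield (U : config) (d : dir) : F3 :=
  fun s a b => pd d0 (jc U d) s a b - pd d (jc U d0) s a b + Fc U d0 d s a b.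

Lemma smooth3_Xfield U d : smooth_config U -> smooth3 (Xfield U d).
Proof.
  intro H. pose proof (smooth3_jc U d H). pose proof (smooth3_jc U d0 H).
  pose proof (smooth3_cA U d H). pose proof (smooth3_cA U d0 H).
  unfold Xfield, Fc. smooth3_tac.
Qed.

Ltac expand_pd :=
  repeat first [ rewrite pd_plus by (apply smooth3_has_pd; smooth3_tac)
               | rewrite pd_minus by (apply smooth3_has_pd; smooth3_tac)
               | rewrite pd_mult by (apply smooth3_has_pd; smooth3_tac)
               | rewrite pd_opp by (apply smooth3_has_pd; smooth3_tac) ].

(** Gauge invariant form: [X_k = 2 <i D_0 phi, D_k phi> + (1 - |phi|^2) F_0k];
    the second derivatives of [phi] cancel since they commute. *)
Lemma Xfield_covariant U d s a b : smooth_config U ->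
  Xfield U d s a b = 2 * (Dre U d0 s a b * Dim U d s a b - Dim U d0 s a b * Dre U d s a b)
     + (1 - phisq U s a b) * Fc U d0 d s a b.
Proof.
  intro H. pose proof H as [Hu [Hv _]].
  pose proof (smooth3_cA U d H). pose proof (smooth3_cA U d0 H).
  unfold Xfield, jc, Dre, Dim. expand_pd.
  rewrite (pd_comm d d0 (cu U)), (pd_comm d d0 (cv U)) by assumption.
  unfold phisq, Fc. ring.
Qed.

Lemma omega_time_derivative U s a b : smooth_config U ->
  2 * pd d0 (omega U) s a b = pd d1 (Xfield U d2) s a b - pd d2 (Xfield U d1) s a b.
Proof.
  intro H. pose proof (smooth3_jc U d1 H). pose proof (smooth3_jc U d2 H).
  pose proof (smooth3_jc U d0 H). pose proof (smooth3_cA U d1 H).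
  pose proof (smooth3_cA U d2 H). pose proof (smooth3_cA U d0 H).
  unfold omega, Xfield, Fc. expand_pd. rewrite pd_const.
  rewrite (pd_comm d1 d0 (jc U d2)), (pd_comm d2 d0 (jc U d1)), (pd_comm d1 d2 (jc U d0)),
    (pd_comm d1 d0 (cA U d2)), (pd_comm d2 d0 (cA U d1)), (pd_comm d1 d2 (cA U d0))
    by assumption.
  field.
Qed.

(** * The pointwise estimate *)

Lemma young_cross p q pk qk w : 0 <= w ->
  w * Rabs (2 * (p * qk - q * pk)) <= p ^ 2 + q ^ 2 + w ^ 2 * (pk ^ 2 + qk ^ 2).
Proof.
  intro Hw. rewrite <- (Rabs_right w) at 1 by lra. rewrite <- Rabs_mult. apply Rabs_le. split.
  - pose proof (pow2_ge_0 (p + w * qk)); pose proof (pow2_ge_0 (q - w * pk)). nra.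
  - pose proof (pow2_ge_0 (p - w * qk)); pose proof (pow2_ge_0 (q + w * pk)). nra.
Qed.

Lemma young_potential P F w eps Rad : 0 <= w -> w <= Rad ^ 2 -> 0 < eps ->
  w * Rabs (P * F) <= / 2 * (Rad ^ 2 * (eps ^ 2 * F ^ 2)) + / 2 * (w * (P / eps) ^ 2).
Proof.
  intros Hw HwR He. set (z := P / eps).
  replace P with (z * eps) by (unfold z; field; lra).
  rewrite <- (Rabs_right w) at 1 by lra. rewrite <- Rabs_mult.
  assert (w * (eps ^ 2 * F ^ 2) <= Rad ^ 2 * (eps ^ 2 * F ^ 2)).
  { apply Rmult_le_compat_r; [|exact HwR]. apply Rmult_le_pos; apply pow2_ge_0. }
  apply Rabs_le. split.
  - pose proof (Rmult_le_pos _ _ Hw (pow2_ge_0 (z + eps * F))). nra.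
  - pose proof (Rmult_le_pos _ _ Hw (pow2_ge_0 (z - eps * F))). nra.
Qed.

Definition Kconst (Rad lam : R) : R := 2 + 2 * Rad ^ 2 + 8 / lam.

Lemma Kconst_nonneg Rad lam : 0 < lam -> 0 <= Kconst Rad lam.
Proof.
  intro. unfold Kconst. pose proof (pow2_ge_0 Rad).
  assert (0 < 8 / lam) by (apply Rdiv_lt_0_compat; lra). lra.
Qed.

Lemma absorb_constants P Fe S Z T w Rad lam : 0 <= P -> 0 <= Fe -> 0 <= S -> 0 <= Z ->
  0 <= T -> 0 <= w -> 0 < lam ->
  2 * P + Rad ^ 2 * (w * S) + Rad ^ 2 / 2 * Fe + w * T
  <= Kconst Rad lam * (P + Fe + w * (/ 2 * S + Z + lam / 8 * T)).
Proof.
  intros. unfold Kconst. set (k := 8 / lam). set (r := Rad ^ 2).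
  assert (Hk : 0 < k) by (unfold k; apply Rdiv_lt_0_compat; lra).
  assert (Hr : 0 <= r) by apply pow2_ge_0.
  replace (lam / 8) with (/ k) by (unfold k; field; lra).
  assert (Hwt : k * (w * (/ k * T)) = w * T) by (field; lra).
  assert (0 <= w * S) by nra. assert (0 <= w * Z) by nra.
  assert (0 <= w * (/ k * T)) by (apply Rmult_le_pos; [|apply Rmult_le_pos; [apply Rlt_le, Rinv_0_lt_compat|]]; lra).
  nra.
Qed.

(** The integrand after integration by parts is controlled by [rho]:
    [|y|^2 (|X_1| + |X_2|) <= Kconst * rho], written in the components
    [p + i q = D_0 phi], [pk + i qk = D_k phi], [F_k = F_0k], [ph = |phi|^2]. *)
Lemma Xfield_weighted_bound p q p1 q1 p2 q2 F1 F2 F12 ph w eps lam Rad :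
  0 <= w -> w <= Rad ^ 2 -> 0 < eps -> 0 < lam ->
  w * (Rabs (2 * (p * q1 - q * p1) + (1 - ph) * F1) + Rabs (2 * (p * q2 - q * p2) + (1 - ph) * F2))
  <= Kconst Rad lam * ((p ^ 2 + q ^ 2) + eps ^ 2 * (F1 ^ 2 + F2 ^ 2) +
       w * (/ 2 * ((p1 ^ 2 + q1 ^ 2) + (p2 ^ 2 + q2 ^ 2)) + eps ^ 2 / 4 * F12 ^ 2
            + lam / (8 * eps ^ 2) * (ph - 1) ^ 2)).
Proof.
  intros Hw HwR He Hl.
  assert (A1 := young_cross p q p1 q1 w Hw). assert (A2 := young_cross p q p2 q2 w Hw).
  assert (B1 := young_potential (1 - ph) F1 w eps Rad Hw HwR He).
  assert (B2 := young_potential (1 - ph) F2 w eps Rad Hw HwR He).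
  pose proof (Rabs_triang (2 * (p * q1 - q * p1)) ((1 - ph) * F1)).
  pose proof (Rabs_triang (2 * (p * q2 - q * p2)) ((1 - ph) * F2)).
  set (T := ((1 - ph) / eps) ^ 2) in *.
  replace (lam / (8 * eps ^ 2) * (ph - 1) ^ 2) with (lam / 8 * T) by (unfold T; field; lra).
  assert (Hsq : forall x y, 0 <= x ^ 2 + y ^ 2)
    by (intros x y; pose proof (pow2_ge_0 x); pose proof (pow2_ge_0 y); lra).
  assert (Ww : w ^ 2 * (p1 ^ 2 + q1 ^ 2) + w ^ 2 * (p2 ^ 2 + q2 ^ 2)
     <= Rad ^ 2 * (w * ((p1 ^ 2 + q1 ^ 2) + (p2 ^ 2 + q2 ^ 2)))).
  { pose proof (Hsq p1 q1); pose proof (Hsq p2 q2).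
    replace (Rad ^ 2 * (w * ((p1 ^ 2 + q1 ^ 2) + (p2 ^ 2 + q2 ^ 2))))
      with ((Rad ^ 2 * w) * ((p1 ^ 2 + q1 ^ 2) + (p2 ^ 2 + q2 ^ 2))) by ring.
    replace (w ^ 2 * (p1 ^ 2 + q1 ^ 2) + w ^ 2 * (p2 ^ 2 + q2 ^ 2))
      with ((w * w) * ((p1 ^ 2 + q1 ^ 2) + (p2 ^ 2 + q2 ^ 2))) by ring.
    apply Rmult_le_compat_r; [lra | apply Rmult_le_compat_r; lra]. }
  apply Rle_trans with (2 * (p ^ 2 + q ^ 2) + Rad ^ 2 * (w * ((p1 ^ 2 + q1 ^ 2) + (p2 ^ 2 + q2 ^ 2)))
                       + Rad ^ 2 / 2 * (eps ^ 2 * (F1 ^ 2 + F2 ^ 2)) + w * T).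
  - pose proof (Rmult_le_compat_l w _ _ Hw H). pose proof (Rmult_le_compat_l w _ _ Hw H0).
    rewrite Rmult_plus_distr_l in *. lra.
  - apply absorb_constants; try lra;
      repeat first [ apply pow2_ge_0 | apply Rplus_le_le_0_compat | apply Rmult_le_pos | lra ].
Qed.

Lemma curl_integrand_bound Rad Cf f lam eps U s a b : cutoff Rad Cf f -> 0 < lam -> 0 < eps ->
  smooth_config U -> norm2 a b <= Rad ->
  Rabs (radial_grad f a b * Xfield U d1 s a b - radial_grad f b a * Xfield U d2 s a b)
  <= Cf * Kconst Rad lam * rhs_density eps lam U s a b.
Proof.
  intros Hf Hl He HU Hr. pose proof (cutoff_Cf_nonneg _ _ _ Hf) as HC.
  set (w := a ^ 2 + b ^ 2).
  assert (Hw : norm2 a b ^ 2 = w) by apply norm2_sqr.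
  assert (Hw0 : 0 <= w) by (rewrite <- Hw; apply pow2_ge_0).
  assert (HwR : w <= Rad ^ 2) by (rewrite <- Hw; apply pow_incr; split; [apply norm2_nonneg | exact Hr]).
  assert (G1 := radial_grad_bound Rad Cf f Hf a b Hr).
  assert (G2 := radial_grad_bound Rad Cf f Hf b a ltac:(rewrite norm2_sym; exact Hr)).
  rewrite norm2_sym, Hw in G2. rewrite Hw in G1.
  apply Rle_trans with (Cf * (w * (Rabs (Xfield U d1 s a b) + Rabs (Xfield U d2 s a b)))).
  - unfold Rminus. eapply Rle_trans; [apply Rabs_triang|].
    rewrite Rabs_Ropp, !Rabs_mult.
    pose proof (Rmult_le_compat_r _ _ _ (Rabs_pos (Xfield U d1 s a b)) G1).
    pose proof (Rmult_le_compat_r _ _ _ (Rabs_pos (Xfield U d2 s a b)) G2). lra.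
  - rewrite Rmult_assoc. apply Rmult_le_compat_l; [exact HC|].
    rewrite !Xfield_covariant by exact HU.
    unfold rhs_density, e_nu, Dsq. fold w. apply Xfield_weighted_bound; assumption.
Qed.

Lemma rhs_density_continuous eps lam U : smooth_config U -> continuous3 (rhs_density eps lam U).
Proof.
  intro H. pose proof H as [Hu [Hv _]].
  pose proof (smooth3_cA U d0 H). pose proof (smooth3_cA U d1 H). pose proof (smooth3_cA U d2 H).
  unfold rhs_density, e_nu, Dsq, Dre, Dim, Fc, phisq.
  repeat first [ apply continuous3_plus | apply continuous3_minus | apply continuous3_mult
               | apply continuous3_pow | apply continuous3_const | apply continuous3_proj1
               | apply continuous3_proj2 | apply smooth3_continuous; smooth3_tac ].
Qed.

(** * The confinement estimate *)

Section Confinement.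

Variables (Rad Cf lam eps : R) (f : R -> R) (U : config) (m : Z).
Hypothesis HR : 0 < Rad.
Hypothesis Hlam : 0 < lam.
Hypothesis Heps : 0 < eps.
Hypothesis Hf : cutoff Rad Cf f.
Hypothesis HU : smooth_config U.

Let radial_C2 := cutoff_radial_continuous Rad Cf f Hf.
Let Homega := smooth3_omega U HU.

Lemma Dconf_increment t :
  Dconf m Rad f U t - Dconf m Rad f U 0 =
  - RInt (fun s => disc_RInt Rad (fun a b => f (norm2 a b) * pd d0 (omega U) s a b)) 0 t.
Proof.
  assert (Cradial3 : continuous3 (fun _ a b => f (norm2 a b))) by (apply continuous3_static, radial_C2).
  assert (Ck : continuous3 (fun s a b => f (norm2 a b) * omega U s a b)).
  { apply continuous3_mult; [exact Cradial3 | apply smooth3_continuous, Homega]. }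
  rewrite <- disc_RInt_FTC with (k := fun s a b => f (norm2 a b) * omega U s a b); auto.
  - unfold Dconf.
    rewrite !disc_int_RInt by (auto; first [exact (C2_time_slice _ t Ck) | exact (C2_time_slice _ 0 Ck)]).
    unfold norm2. ring.
  - apply continuous3_mult; [exact Cradial3 | apply smooth3_continuous, smooth3_pd, Homega].
  - intros s a b. apply (derivable_pt_lim_scal (fun z => omega U z a b)).
    apply (pd_spec d0 (omega U) s a b), smooth3_has_pd, Homega.
Qed.

Lemma disc_dtime_omega s :
  disc_RInt Rad (fun a b => f (norm2 a b) * pd d0 (omega U) s a b) =
  / 2 * disc_RInt Rad (fun a b => radial_grad f a b * Xfield U d1 s a b
                                  - radial_grad f b a * Xfield U d2 s a b).
Proof.
  assert (S1 := smooth3_Xfield U d1 HU). assert (S2 := smooth3_Xfield U d2 HU).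
  assert (CX : forall d g, smooth3 g -> C2 (pd d g s)).
  { intros d g Hg. apply C2_time_slice, smooth3_continuous, smooth3_pd, Hg. }
  rewrite (disc_RInt_ext Rad _ (fun a b => / 2 * (f (norm2 a b) *
             (pd d1 (Xfield U d2) s a b - pd d2 (Xfield U d1) s a b)))).
  - rewrite disc_RInt_scal by (first [exact HR | apply C2_mult; [exact radial_C2 | apply C2_minus; auto]]).
    f_equal. apply (disc_RInt_curl Rad Cf); auto;
      try (apply C2_time_slice, smooth3_continuous; assumption).
    + intros a b. apply (pd_spec d2 (Xfield U d1) s a b), smooth3_has_pd, S1.
    + intros a b. apply (pd_spec d1 (Xfield U d2) s a b), smooth3_has_pd, S2.
  - intros a b. rewrite <- omega_time_derivative by exact HU. field.
Qed.

Lemma disc_dtime_omega_bound s :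
  Rabs (disc_RInt Rad (fun a b => f (norm2 a b) * pd d0 (omega U) s a b))
  <= / 2 * (Cf * Kconst Rad lam) * disc_RInt Rad (rhs_density eps lam U s).
Proof.
  pose proof (cutoff_Cf_nonneg _ _ _ Hf). pose proof (Kconst_nonneg Rad lam Hlam).
  assert (Crho := rhs_density_continuous eps lam U HU).
  rewrite disc_dtime_omega, Rabs_mult, Rabs_right, Rmult_assoc by lra.
  apply Rmult_le_compat_l; [lra|].
  rewrite <- disc_RInt_scal by (auto; apply C2_time_slice, Crho).
  apply disc_RInt_abs_le; auto.
  - apply C2_minus; apply C2_mult;
      first [ apply (radial_grad_continuous Rad Cf f HR Hf)
            | apply (radial_grad_swap_continuous Rad Cf f HR Hf)
            | apply C2_time_slice, smooth3_continuous, smooth3_Xfield, HU ].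
  - intros x y. apply continuity_2d_pt_mult;
      [apply continuity_2d_pt_const | apply (C2_time_slice _ s Crho)].
  - intros a b Hr. apply curl_integrand_bound; assumption.
Qed.

Lemma confinement_estimate t : 0 <= t ->
  Rabs (Dconf m Rad f U t - Dconf m Rad f U 0)
  <= / 2 * (Cf * Kconst Rad lam) * spacetime_int t Rad (rhs_density eps lam U).
Proof.
  intro Ht. set (K := / 2 * (Cf * Kconst Rad lam)).
  assert (Crho := rhs_density_continuous eps lam U HU).
  set (dD := fun s => disc_RInt Rad (fun a b => f (norm2 a b) * pd d0 (omega U) s a b)).
  assert (CdD : forall z, continuous dD z).
  { intro. apply (disc_RInt_continuous Rad (fun s a b => f (norm2 a b) * pd d0 (omega U) s a b));
      [exact HR|]. apply continuous3_mult;
      [apply continuous3_static, radial_C2 | apply smooth3_continuous, smooth3_pd, Homega]. }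
  assert (Crho' : forall z, continuous (fun s => disc_RInt Rad (rhs_density eps lam U s)) z).
  { intro. apply disc_RInt_continuous; assumption. }
  rewrite Dconf_increment, Rabs_Ropp. fold dD.
  eapply Rle_trans; [apply abs_RInt_le; [exact Ht | apply ex_RInt_continuous_R, CdD]|].
  eapply Rle_trans; [apply RInt_le with (g := fun s => K * disc_RInt Rad (rhs_density eps lam U s))|].
  - exact Ht.
  - apply ex_RInt_continuous_R. intro.
    apply (continuous_comp dD Rabs); [apply CdD | apply continuous_Rabs].
  - apply ex_RInt_continuous_R. intro.
    apply (continuous_scal_r (K := R_AbsRing) (V := R_NormedModule)), Crho'.
  - intros x _. apply disc_dtime_omega_bound.
  - rewrite RInt_scal_R by (apply ex_RInt_continuous_R, Crho').
    right. f_equal. unfold spacetime_int. symmetry.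
    rewrite (RInt_ext _ (fun y0 => disc_int Rad (rhs_density eps lam U y0))).
    + apply RI_RInt. apply ex_RInt_continuous_R. intro z.
      apply (continuous_ext (fun s => disc_RInt Rad (rhs_density eps lam U s))); [|apply Crho'].
      intro. symmetry. apply disc_int_RInt; [exact HR | apply C2_time_slice, Crho].
    + intros. symmetry. apply disc_int_RInt; [exact HR | apply C2_time_slice, Crho].
Qed.

End Confinement.

Theorem proposition3p1 (Rad : R) (m : Z) (lam : R) (f : R -> R)
  (HR : 0 < Rad) (Hlam : 0 < lam)
  (Hf_smooth : smooth1 f)
  (Hf_range : forall r, 0 <= r <= Rad -> 0 <= f r <= 1)
  (Hf0 : f 0 = 1) (HfR : f Rad = 0)
  (Hf_deriv : exists Cf : R, forall r l, 0 <= r <= Rad ->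
       derivable_pt_lim f r l -> - Cf * r ^ 2 <= l <= 0) :
  exists C : R, forall (eps T : R) (U : config),
    0 < eps -> 0 < T -> smooth_config U ->
    forall t : R, 0 < t < T ->
      Rabs (Dconf m Rad f U t - Dconf m Rad f U 0)
      <= C * spacetime_int t Rad (rhs_density eps lam U).
Proof.
  destruct (smooth_cutoff Rad f Hf_smooth HfR Hf_deriv) as [Cf Hf].
  exists (/ 2 * (Cf * Kconst Rad lam)).
  intros eps T U Heps _ HU t Ht.
  apply confinement_estimate; auto; lra.
Qed.
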